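(* Consider the properties of a binary relation: (1) transitivity, (2) reflexivity, (3) symmetry, (4) antireflexivity ($x$ is never related to $x$), (5) antisymmetry. (A) For every pair $P,Q\subseteq\{1,2,3,4,5\}$, the class $\mathcal{K}_{P,Q}$ of structures $(X,R,S)$ where $R$ is a binary relation satisfying the properties in $P$ and $S$ is a binary relation coarser than $R$ (i.e. $R\subseteq S$) satisfying the properties in $Q$ has SAP; in fact superSAP holds simultaneously with respect to $R$ and $S$ (one amalgam witnesses both). The class of finite members of $\mathcal{K}_{P,Q}$ has a Fraïssé limit $\mathbf{M}$; $Th(\mathbf{M})$ is $\omega$-categorical, has quantifier elimination, and is the model completion of the first-order theory of $\mathcal{K}_{P,Q}$. (B) SuperSAP (simultaneously with respect to $R$ and $S$) is maintained if to $\mathcal{K}_{P,Q}$ we add families of (i) unary operations which are both $R$- and $S$-preserving; (ii) unary operations which are both $R$- and $S$-reversing; (iii) unary operations which are $R$-preserving; (iv) unary operations which are $R$-reversing. Fraïssé limits of the corresponding classes of finite structures still exist provided only finitely many operations are added. (C) The class of structures $(X,R,S,f)$ with $R$ a transitive binary relation, $S$ a binary relation coarser than $R$, and $f$ an $S$-preserving unary operation (not required to be $R$-preserving) does not have the amalgamation property. (D) The class of structures $(X,\le,S_1,f)$ with $\le$ a partial order, $S_1$ a symmetric reflexive relation coarser than $\le$, and $f$ an $S_1$-preserving unary operation does not have the amalgamation property.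
   Context: A unary operation $h$ is $T$-preserving for a binary relation $T$ if $x\,T\,y$ implies $h(x)\,T\,h(y)$, and $T$-reversing if $x\,T\,y$ implies $h(y)\,T\,h(x)$. All classes are closed under isomorphism. A triple to be amalgamated is $\mathbf{A},\mathbf{B},\mathbf{C}$ in the class with $\mathbf{C}\subseteq\mathbf{A}$, $\mathbf{C}\subseteq\mathbf{B}$, $C=A\cap B$. Amalgamation property (AP): for each such triple there are $\mathbf{D}$ in the class and embeddings of $\mathbf{A}$ and $\mathbf{B}$ into $\mathbf{D}$ agreeing on $C$. SAP: there is $\mathbf{D}$ in the class with $\mathbf{A},\mathbf{B}\subseteq\mathbf{D}$. SuperSAP with respect to a relation $R$: a $\mathbf{D}$ witnessing SAP such that for $a\in A\setminus B$, $b\in B\setminus A$, $a\,R_{\mathbf{D}}\,b$ implies $a\,R_{\mathbf{A}}\,c\,R_{\mathbf{B}}\,b$ for some $c\in C$, and $b\,R_{\mathbf{D}}\,a$ implies $b\,R_{\mathbf{B}}\,c\,R_{\mathbf{A}}\,a$ for some $c\in C$. A Fraïssé limit of a class of finitely generated structures in a countable language is a countable ultrahomogeneous structure with that age. A model completion of $T$ is a model complete theory with the same universal consequences as $T$, where $T$ has AP. *)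

From Stdlib Require Import List.
Import ListNotations.
Set Implicit Arguments.

Record Str (I : Type) : Type := mkStr {
  car :> Type;
  rR : car -> car -> Prop;
  rS : car -> car -> Prop;
  op : I -> car -> car }.
Arguments mkStr {I} car rR rS op.
Arguments rR {I} s _ _.
Arguments rS {I} s _ _.
Arguments op {I} s _ _.

Definition emb {I} {A B : Str I} (h : A -> B) : Prop :=
  (forall x y, h x = h y -> x = y) /\
  (forall x y, rR A x y <-> rR B (h x) (h y)) /\
  (forall x y, rS A x y <-> rS B (h x) (h y)) /\
  (forall i x, h (op A i x) = op B i (h x)).

Definition iso {I} {A B : Str I} (h : A -> B) : Prop :=
  emb h /\ forall y, exists x, h x = y.

(* A triple C <= A, C <= B is given by embeddings f : C -> A, g : C -> B
   (classes are closed under isomorphism, so this is the paper's setting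
   with C = A /\ B after renaming). *)
Definition AP {I} (K : Str I -> Prop) : Prop :=
  forall (A B C : Str I) (f : C -> A) (g : C -> B),
    K A -> K B -> K C -> emb f -> emb g ->
    exists (D : Str I) (i : A -> D) (j : B -> D),
      K D /\ emb i /\ emb j /\ (forall c, i (f c) = j (g c)).

Definition rel {I} (sel : bool) (N : Str I) : N -> N -> Prop :=
  if sel then rR N else rS N.

Definition not_in_img {C A : Type} (f : C -> A) (a : A) : Prop :=
  ~ exists c, f c = a.

Definition SAP {I} (K : Str I -> Prop) : Prop :=
  forall (A B C : Str I) (f : C -> A) (g : C -> B),
    K A -> K B -> K C -> emb f -> emb g ->
    exists (D : Str I) (i : A -> D) (j : B -> D),
      K D /\ emb i /\ emb j /\ (forall c, i (f c) = j (g c)) /\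
      (forall a b, i a = j b -> exists c, f c = a /\ g c = b).

(* superSAP simultaneously with respect to R (sel = true) and S (sel = false):
   one strong amalgam D witnessing the superSAP condition for both. *)
Definition superSAP_RS {I} (K : Str I -> Prop) : Prop :=
  forall (A B C : Str I) (f : C -> A) (g : C -> B),
    K A -> K B -> K C -> emb f -> emb g ->
    exists (D : Str I) (i : A -> D) (j : B -> D),
      K D /\ emb i /\ emb j /\ (forall c, i (f c) = j (g c)) /\
      (forall a b, i a = j b -> exists c, f c = a /\ g c = b) /\
      (forall (sel : bool) (a : A) (b : B), not_in_img f a -> not_in_img g b ->
        (rel sel D (i a) (j b) -> exists c, rel sel A a (f c) /\ rel sel B (g c) b) /\
        (rel sel D (j b) (i a) -> exists c, rel sel B b (g c) /\ rel sel A (f c) a)).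

Definition finite_type (T : Type) : Prop := exists l : list T, forall x, In x l.
Definition countable (T : Type) : Prop :=
  exists f : T -> nat, forall x y, f x = f y -> x = y.
Definition infinite (T : Type) : Prop := forall l : list T, exists x, ~ In x l.

Definition finite_mem {I} (K : Str I -> Prop) (N : Str I) : Prop :=
  K N /\ finite_type N.

Record substr {I} (M : Str I) := {
  sp : M -> Prop;
  sp_closed : forall i x, sp x -> sp (op M i x) }.
Arguments sp {I M} s _.
Arguments sp_closed {I M} s _ _ _.

Definition induced {I} {M : Str I} (X : substr M) : Str I :=
  mkStr {x : M | sp X x}
    (fun x y => rR M (proj1_sig x) (proj1_sig y))
    (fun x y => rS M (proj1_sig x) (proj1_sig y))
    (fun i x => exist _ (op M i (proj1_sig x)) (sp_closed X i _ (proj2_sig x))).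

Inductive gen {I} (M : Str I) (l : list M) : M -> Prop :=
| gen_base : forall x, In x l -> gen M l x
| gen_op : forall i x, gen M l x -> gen M l (op M i x).

Definition fin_gen {I} {M : Str I} (X : substr M) : Prop :=
  exists l : list M, forall x, sp X x <-> gen M l x.

Definition age_is {I} (M : Str I) (K : Str I -> Prop) : Prop :=
  forall N : Str I, K N <->
    exists X : substr M, fin_gen X /\ exists h : N -> induced X, iso h.

Definition ultrahomogeneous {I} (M : Str I) : Prop :=
  forall (X Y : substr M), fin_gen X -> fin_gen Y ->
  forall h : induced X -> induced Y, iso h ->
  exists s : M -> M, iso s /\ forall x, s (proj1_sig x) = proj1_sig (h x).

Definition Fraisse_limit {I} (K : Str I -> Prop) (M : Str I) : Prop :=
  countable M /\ ultrahomogeneous M /\ age_is M K.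

(* (structures without operations: Str Empty_set); de Bruijn variables *)
Inductive fm : Type :=
| fR : nat -> nat -> fm
| fS : nat -> nat -> fm
| fEq : nat -> nat -> fm
| fBot : fm
| fImp : fm -> fm -> fm
| fAll : fm -> fm.

Definition RSStr := Str Empty_set.

Definition scons {T} (x : T) (e : nat -> T) (n : nat) : T :=
  match n with 0 => x | S m => e m end.

Fixpoint sat (N : RSStr) (e : nat -> N) (p : fm) : Prop :=
  match p with
  | fR i j => rR N (e i) (e j)
  | fS i j => rS N (e i) (e j)
  | fEq i j => e i = e j
  | fBot => False
  | fImp a b => sat N e a -> sat N e b
  | fAll a => forall x : N, sat N (scons x e) a
  end.

(* all free variables are < n *)
Fixpoint bound (n : nat) (p : fm) : Prop :=
  match p with
  | fR i j | fS i j | fEq i j => i < n /\ j < n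
  | fBot => True
  | fImp a b => bound n a /\ bound n b
  | fAll a => bound (S n) a
  end.

Definition sentence (p : fm) : Prop := bound 0 p.

Fixpoint qf (p : fm) : Prop :=
  match p with
  | fAll _ => False
  | fImp a b => qf a /\ qf b
  | _ => True
  end.

Definition universal (p : fm) : Prop :=
  exists k psi, qf psi /\ p = Nat.iter k fAll psi.

Definition theory := fm -> Prop.

Definition holds (N : RSStr) (p : fm) : Prop := forall e, sat N e p.

Definition Th (N : RSStr) : theory := fun p => sentence p /\ holds N p.

Definition ThK (K : RSStr -> Prop) : theory :=
  fun p => sentence p /\ forall N, K N -> inhabited N -> holds N p.

Definition model (T : theory) (N : RSStr) : Prop :=
  inhabited N /\ forall p, T p -> holds N p.

Definition entails (T : theory) (p : fm) : Prop :=
  forall N, model T N -> holds N p.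

Definition elementary {N N' : RSStr} (h : N -> N') : Prop :=
  forall p e, sat N e p <-> sat N' (fun n => h (e n)) p.

Definition model_complete (T : theory) : Prop :=
  forall (N N' : RSStr) (h : N -> N'),
    model T N -> model T N' -> emb h -> elementary h.

Definition model_completion (T' T : theory) : Prop :=
  model_complete T' /\
  (forall p, sentence p -> universal p -> (entails T p <-> entails T' p)) /\
  AP (model T).

Definition QE (T : theory) : Prop :=
  forall n p, bound n p ->
    exists psi, qf psi /\ bound n psi /\
      forall N, model T N -> forall e, sat N e p <-> sat N e psi.

Definition omega_categorical (T : theory) : Prop :=
  forall N N' : RSStr, model T N -> model T N' ->
    countable N -> infinite N -> countable N' -> infinite N' ->
    exists h : N -> N', iso h.

(* 1 transitivity, 2 reflexivity, 3 symmetry, 4 antireflexivity, 5 antisymmetry *)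
Inductive rprop := Trans | Refl | Symm | Irrefl | Antisym.

Definition has_prop {T : Type} (p : rprop) (r : T -> T -> Prop) : Prop :=
  match p with
  | Trans => forall x y z, r x y -> r y z -> r x z
  | Refl => forall x, r x x
  | Symm => forall x y, r x y -> r y x
  | Irrefl => forall x, ~ r x x
  | Antisym => forall x y, r x y -> r y x -> x = y
  end.

Definition RS_conds {I} (P Q : rprop -> Prop) (N : Str I) : Prop :=
  (forall p, P p -> has_prop p (rR N)) /\
  (forall q, Q q -> has_prop q (rS N)) /\
  (forall x y, rR N x y -> rS N x y).

Definition KPQ (P Q : rprop -> Prop) : RSStr -> Prop := RS_conds P Q.

Definition preserving {T : Type} (r : T -> T -> Prop) (h : T -> T) : Prop :=
  forall x y, r x y -> r (h x) (h y).
Definition reversing {T : Type} (r : T -> T -> Prop) (h : T -> T) : Prop :=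
  forall x y, r x y -> r (h y) (h x).

(* K_{P,Q} expanded by families of operations of kinds (i),(ii),(iii),(iv)
   indexed by I1, I2, I3, I4 respectively *)
Definition KPQ_ops (P Q : rprop -> Prop) (I1 I2 I3 I4 : Type)
    (N : Str (I1 + I2 + I3 + I4)) : Prop :=
  RS_conds P Q N /\
  (forall i, preserving (rR N) (op N (inl (inl (inl i)))) /\
             preserving (rS N) (op N (inl (inl (inl i))))) /\
  (forall i, reversing (rR N) (op N (inl (inl (inr i)))) /\
             reversing (rS N) (op N (inl (inl (inr i))))) /\
  (forall i, preserving (rR N) (op N (inl (inr i)))) /\
  (forall i, reversing (rR N) (op N (inr i))).

Definition KC (N : Str unit) : Prop :=
  has_prop Trans (rR N) /\ (forall x y, rR N x y -> rS N x y) /\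
  preserving (rS N) (op N tt).

(* (D): R = <= a partial order, S = S_1 symmetric reflexive, <= included in S_1,
   f S_1-preserving *)
Definition KD (N : Str unit) : Prop :=
  has_prop Refl (rR N) /\ has_prop Trans (rR N) /\ has_prop Antisym (rR N) /\
  has_prop Symm (rS N) /\ has_prop Refl (rS N) /\
  (forall x y, rR N x y -> rS N x y) /\
  preserving (rS N) (op N tt).
Arguments KPQ_ops P Q I1 I2 I3 I4 N : clear implicits.

(* Amalgamation: glue A and B along C, and let R be the union of the two copies of R, together
   with the two-step paths when R must be transitive.  Two steps suffice: of three consecutive
   steps, two lie on the same side, and a two-step path between points of one side through a
   point of the other side passes through C.  S is built in the same way and enlarged by R (and
   by the converse of R when S must be symmetric) so that R <= S.  Every property then either
   restricts to A and B, or, for a new point a of A and a new point b of B, reduces to A and B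
   through a point of C; operations of each kind preserve or reverse every path step by step.
   A new point of A and a new point of B are related only through C, which is superSAP.

   Fraisse limit: with finitely many operations, finite structures are coded by natural
   numbers, and the limit is the union of a chain of finite stages on initial segments of nat;
   stage k+1 amalgamates over stage k the k-th task of an enumeration in which every task (a
   coded finite structure B with an embedding into B of a finitely generated substructure of
   the stage) occurs infinitely often.  Back and forth gives ultrahomogeneity.  In the
   relational case ultrahomogeneity makes the type of a tuple depend only on its atomic
   diagram: this is quantifier elimination, hence model completeness; a back and forth along
   atomic diagrams between countable models gives omega-categoricity; and universal sentences
   transfer through finitely generated substructures, which are the members of the class.

   Failure of amalgamation: C = {c, d1, d2}, where S relates every pair except d1 and d2;
   A adds a point a R-below c with f a = d1, B a point b R-above c with f b = d2.  In an
   amalgam a R c R b, so a R b, a S b and f a S f b, i.e. d1 S d2. *)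

From Stdlib Require Import List Arith Lia Classical ClassicalEpsilon
  FunctionalExtensionality ProofIrrelevance Cantor.
Import ListNotations.

(** * Strong amalgamation *)

Inductive op_kind := PresRS | RevRS | PresR | RevR.

Definition kind_R (k : op_kind) {T : Type} (r : T -> T -> Prop) (h : T -> T) : Prop :=
  match k with PresRS | PresR => preserving r h | RevRS | RevR => reversing r h end.

Definition kind_S (k : op_kind) {T : Type} (r : T -> T -> Prop) (h : T -> T) : Prop :=
  match k with PresRS => preserving r h | RevRS => reversing r h | _ => True end.

Definition Kkind {I : Type} (P Q : rprop -> Prop) (kind : I -> op_kind) (N : Str I) : Prop :=
  RS_conds P Q N /\
  forall i, kind_R (kind i) (rR N) (op N i) /\ kind_S (kind i) (rS N) (op N i).

Section Amalgam.
Context {I : Type} (A B C : Str I) (f : C -> A) (g : C -> B).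
Hypothesis f_inj : forall x y, f x = f y -> x = y.
Hypothesis g_inj : forall x y, g x = g y -> x = y.
Hypothesis f_op : forall i x, f (op C i x) = op A i (f x).
Hypothesis g_op : forall i x, g (op C i x) = op B i (g x).

Definition amalg : Type := (A + {b : B | not_in_img g b})%type.

Definition fromA (x : amalg) (a : A) : Prop :=
  match x with inl a' => a' = a | inr _ => False end.

Definition fromB (x : amalg) (b : B) : Prop :=
  match x with inl a => exists c, f c = a /\ g c = b | inr b' => proj1_sig b' = b end.

Definition inB (b : B) : amalg :=
  match excluded_middle_informative (exists c, g c = b) with
  | left H => inl (f (proj1_sig (constructive_indefinite_description _ H)))
  | right H => inr (exist _ b H)
  end.

Lemma fromB_inB b : fromB (inB b) b.
Proof.
  unfold inB; destruct excluded_middle_informative as [H | H]; simpl; auto.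
  destruct constructive_indefinite_description as [c Hc]; simpl; eauto.
Qed.

Lemma fromA_fun x a a' : fromA x a -> fromA x a' -> a = a'.
Proof. destruct x; simpl; intros; subst; auto; contradiction. Qed.

Lemma fromB_fun x b b' : fromB x b -> fromB x b' -> b = b'.
Proof.
  destruct x as [a | b0]; simpl.
  - intros (c & <- & <-) (c' & E & <-). apply f_inj in E; subst; auto.
  - intros; subst; auto.
Qed.

Lemma fromA_inj x y a : fromA x a -> fromA y a -> x = y.
Proof. destruct x, y; simpl; intros; subst; try contradiction; auto. Qed.

Lemma fromB_inj x y b : fromB x b -> fromB y b -> x = y.
Proof.
  destruct x as [a | [b0 H0]], y as [a' | [b1 H1]]; simpl.
  - intros (c & <- & <-) (c' & <- & E). apply g_inj in E; subst; auto.
  - intros (c & <- & <-) E. exfalso. apply H1. exists c. auto.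
  - intros E (c & <- & <-). exfalso. apply H0. exists c. auto.
  - intros <- <-. do 2 f_equal. apply proof_irrelevance.
Qed.

Lemma fromA_fromB x a b : fromA x a -> fromB x b -> exists c, f c = a /\ g c = b.
Proof. destruct x; simpl; intros; subst; auto; contradiction. Qed.

Lemma amalg_cover x : (exists a, fromA x a) \/ (exists b, fromB x b).
Proof. destruct x as [a | [b H]]; simpl; eauto. Qed.

Lemma inB_new b (H : not_in_img g b) : inB b = inr (exist _ b H).
Proof. apply (fromB_inj _ _ b); [apply fromB_inB | reflexivity]. Qed.

Lemma inl_inB c : inl (f c) = inB (g c).
Proof. apply (fromB_inj _ _ (g c)); [simpl; eauto | apply fromB_inB]. Qed.

Lemma inl_inB_inv a b : inl a = inB b -> exists c, f c = a /\ g c = b.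
Proof. intros E. generalize (fromB_inB b). rewrite <- E. auto. Qed.

Definition same_side (x y : amalg) : Prop :=
  (exists a a', fromA x a /\ fromA y a') \/ (exists b b', fromB x b /\ fromB y b').

Lemma amalg_pair_cases x y :
  same_side x y \/
  (exists a b, not_in_img f a /\ not_in_img g b /\ x = inl a /\ y = inB b) \/
  (exists a b, not_in_img f a /\ not_in_img g b /\ x = inB b /\ y = inl a).
Proof.
  destruct x as [a | [b Hb]], y as [a' | [b' Hb']].
  - left; left; exists a, a'; simpl; auto.
  - destruct (classic (not_in_img f a)) as [N | N].
    + right; left; exists a, b'; rewrite (inB_new b' Hb'); auto.
    + apply NNPP in N; destruct N as [c <-]. left; right; exists (g c), b'; simpl; eauto.
  - destruct (classic (not_in_img f a')) as [N | N].
    + right; right; exists a', b; rewrite (inB_new b Hb); auto.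
    + apply NNPP in N; destruct N as [c <-]. left; right; exists b, (g c); simpl; eauto.
  - left; right; exists b, b'; simpl; auto.
Qed.

Definition restricts_to_A (r : amalg -> amalg -> Prop) (rA : A -> A -> Prop) : Prop :=
  forall x y a a', r x y -> fromA x a -> fromA y a' -> rA a a'.

Definition restricts_to_B (r : amalg -> amalg -> Prop) (rB : B -> B -> Prop) : Prop :=
  forall x y b b', r x y -> fromB x b -> fromB y b' -> rB b b'.

Lemma amalg_irrefl r rA rB :
  restricts_to_A r rA -> restricts_to_B r rB ->
  has_prop Irrefl rA -> has_prop Irrefl rB -> has_prop Irrefl r.
Proof.
  intros resA resB irA irB x H.
  destruct (amalg_cover x) as [(a & Ha) | (b & Hb)]; [apply (irA a) | apply (irB b)]; eauto.
Qed.

Lemma amalg_antisym r rA rB :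
  restricts_to_A r rA -> restricts_to_B r rB ->
  has_prop Antisym rA -> has_prop Antisym rB ->
  (forall a b, not_in_img f a -> not_in_img g b ->
     r (inl a) (inB b) -> r (inB b) (inl a) -> False) ->
  has_prop Antisym r.
Proof.
  intros resA resB asA asB cross x y H1 H2.
  destruct (amalg_pair_cases x y)
    as [[(a & a' & Ha & Ha') | (b & b' & Hb & Hb')]
       | [(a & b & Na & Nb & -> & ->) | (a & b & Na & Nb & -> & ->)]].
  - assert (a = a') as <- by (apply asA; eauto). eapply fromA_inj; eauto.
  - assert (b = b') as <- by (apply asB; eauto). eapply fromB_inj; eauto.
  - exfalso; eauto.
  - exfalso; eauto.
Qed.

Lemma cross_cycle (rA sA : A -> A -> Prop) (rB : B -> B -> Prop) a b c c' :
  (forall c c', rA (f c) (f c') <-> rB (g c) (g c')) ->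
  has_prop Trans rA -> has_prop Trans rB ->
  (forall x y, rA x y -> sA x y) -> has_prop Antisym sA ->
  rA a (f c) -> rB (g c) b -> rB b (g c') -> rA (f c') a -> a = f c.
Proof.
  intros fg trA trB rs asA h1 h2 h3 h4.
  assert (rA (f c) (f c')) by (apply fg; eauto). eauto.
Qed.

Section UnionRel.
Variables (rA : A -> A -> Prop) (rB : B -> B -> Prop).
Hypothesis fg_rel : forall c c', rA (f c) (f c') <-> rB (g c) (g c').

Definition union_rel (x y : amalg) : Prop :=
  (exists a a', fromA x a /\ fromA y a' /\ rA a a') \/
  (exists b b', fromB x b /\ fromB y b' /\ rB b b').

Lemma union_rel_same_side x y : union_rel x y -> same_side x y.
Proof. intros [(a & a' & H1 & H2 & _) | (b & b' & H1 & H2 & _)]; [left | right]; eauto. Qed.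

Lemma union_rel_A : restricts_to_A union_rel rA.
Proof.
  intros x y a a' [(a1 & a1' & H1 & H2 & H3) | (b & b' & H1 & H2 & H3)] Ha Ha'.
  - rewrite (fromA_fun _ _ _ Ha H1), (fromA_fun _ _ _ Ha' H2); auto.
  - destruct (fromA_fromB _ _ _ Ha H1) as (c & <- & <-).
    destruct (fromA_fromB _ _ _ Ha' H2) as (c' & <- & <-). apply fg_rel; auto.
Qed.

Lemma union_rel_B : restricts_to_B union_rel rB.
Proof.
  intros x y b b' [(a & a' & H1 & H2 & H3) | (b1 & b1' & H1 & H2 & H3)] Hb Hb'.
  - destruct (fromA_fromB _ _ _ H1 Hb) as (c & <- & <-).
    destruct (fromA_fromB _ _ _ H2 Hb') as (c' & <- & <-). apply fg_rel; auto.
  - rewrite (fromB_fun _ _ _ Hb H1), (fromB_fun _ _ _ Hb' H2); auto.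
Qed.

Lemma union_rel3_same_side x y z w :
  union_rel x y -> union_rel y z -> union_rel z w -> same_side x z \/ same_side y w.
Proof.
  intros H1 H2 H3.
  destruct (union_rel_same_side _ _ H1) as [(a1 & a2 & X1 & Y1) | (b1 & b2 & X1 & Y1)];
  destruct (union_rel_same_side _ _ H2) as [(a3 & a4 & X2 & Y2) | (b3 & b4 & X2 & Y2)];
  destruct (union_rel_same_side _ _ H3) as [(a5 & a6 & X3 & Y3) | (b5 & b6 & X3 & Y3)];
  solve [left; left; eauto | left; right; eauto | right; left; eauto | right; right; eauto].
Qed.

Section Transitive.
Hypothesis trA : has_prop Trans rA.
Hypothesis trB : has_prop Trans rB.

(* The middle point lies on some side; if it is not the side of [x] and [y],
   then [x] and [y] lie on the other side too, i.e. in the image of [C]. *)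
Lemma union_rel2_A x y z : union_rel x z -> union_rel z y ->
  forall a a', fromA x a -> fromA y a' -> rA a a'.
Proof.
  intros H1 H2 a a' Ha Ha'.
  assert (via : forall a'', fromA z a'' -> rA a a').
  { intros a'' Hz. apply (trA _ a'');
      [exact (union_rel_A _ _ _ _ H1 Ha Hz) | exact (union_rel_A _ _ _ _ H2 Hz Ha')]. }
  destruct (amalg_cover z) as [(a'' & Hz) | (b'' & Hz)]; [eauto |].
  destruct (union_rel_same_side _ _ H1) as [(a1 & a2 & _ & Hz') | (b1 & b2 & Hx & _)]; [eauto |].
  destruct (union_rel_same_side _ _ H2) as [(a3 & a4 & Hz' & _) | (b3 & b4 & _ & Hy)]; [eauto |].
  destruct (fromA_fromB _ _ _ Ha Hx) as (c & <- & <-).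
  destruct (fromA_fromB _ _ _ Ha' Hy) as (c' & <- & <-).
  apply fg_rel, (trB _ b'');
    [exact (union_rel_B _ _ _ _ H1 Hx Hz) | exact (union_rel_B _ _ _ _ H2 Hz Hy)].
Qed.

Lemma union_rel2_B x y z : union_rel x z -> union_rel z y ->
  forall b b', fromB x b -> fromB y b' -> rB b b'.
Proof.
  intros H1 H2 b b' Hb Hb'.
  assert (via : forall b'', fromB z b'' -> rB b b').
  { intros b'' Hz. apply (trB _ b'');
      [exact (union_rel_B _ _ _ _ H1 Hb Hz) | exact (union_rel_B _ _ _ _ H2 Hz Hb')]. }
  destruct (amalg_cover z) as [(a'' & Hz) | (b'' & Hz)]; [| eauto].
  destruct (union_rel_same_side _ _ H1) as [(a1 & a2 & Hx & _) | (b1 & b2 & _ & Hz')]; [| eauto].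
  destruct (union_rel_same_side _ _ H2) as [(a3 & a4 & _ & Hy) | (b3 & b4 & Hz' & _)]; [| eauto].
  destruct (fromA_fromB _ _ _ Hx Hb) as (c & <- & <-).
  destruct (fromA_fromB _ _ _ Hy Hb') as (c' & <- & <-).
  apply fg_rel, (trA _ a'');
    [exact (union_rel_A _ _ _ _ H1 Hx Hz) | exact (union_rel_A _ _ _ _ H2 Hz Hy)].
Qed.

Lemma union_rel2_same_side x y z :
  union_rel x z -> union_rel z y -> same_side x y -> union_rel x y.
Proof.
  intros H1 H2 [(a & a' & Ha & Ha') | (b & b' & Hb & Hb')]; [left | right].
  - exists a, a'. split; [| split]; auto. exact (union_rel2_A _ _ _ H1 H2 _ _ Ha Ha').
  - exists b, b'. split; [| split]; auto. exact (union_rel2_B _ _ _ H1 H2 _ _ Hb Hb').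
Qed.

End Transitive.

(* [T] holds when the relation has to be transitive. *)
Definition amalg_rel (T : Prop) (x y : amalg) : Prop :=
  union_rel x y \/ (T /\ exists z, union_rel x z /\ union_rel z y).

Section AmalgRel.
Variable T : Prop.
Hypothesis T_trans : T -> has_prop Trans rA /\ has_prop Trans rB.

Lemma amalg_rel_A : restricts_to_A (amalg_rel T) rA.
Proof.
  intros x y a a' [H | (t & z & H1 & H2)] Ha Ha'; [eapply union_rel_A; eauto |].
  destruct (T_trans t) as [trA trB]. exact (union_rel2_A trA trB _ _ _ H1 H2 _ _ Ha Ha').
Qed.

Lemma amalg_rel_B : restricts_to_B (amalg_rel T) rB.
Proof.
  intros x y b b' [H | (t & z & H1 & H2)] Hb Hb'; [eapply union_rel_B; eauto |].
  destruct (T_trans t) as [trA trB]. exact (union_rel2_B trA trB _ _ _ H1 H2 _ _ Hb Hb').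
Qed.

Lemma union_rel3_amalg_rel x y z w :
  T -> union_rel x y -> union_rel y z -> union_rel z w -> amalg_rel T x w.
Proof.
  intros t H1 H2 H3. destruct (T_trans t) as [trA trB]. right; split; auto.
  destruct (union_rel3_same_side _ _ _ _ H1 H2 H3) as [S | S].
  - exists z. split; auto. exact (union_rel2_same_side trA trB _ _ _ H1 H2 S).
  - exists y. split; auto. exact (union_rel2_same_side trA trB _ _ _ H2 H3 S).
Qed.

Lemma amalg_rel_trans : T -> has_prop Trans (amalg_rel T).
Proof.
  intros t x y z [H1 | (_ & u & H1 & H1')] [H2 | (_ & v & H2 & H2')].
  - right; eauto.
  - exact (union_rel3_amalg_rel _ _ _ _ t H1 H2 H2').
  - exact (union_rel3_amalg_rel _ _ _ _ t H1 H1' H2).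
  - destruct (union_rel3_amalg_rel _ _ _ _ t H1 H1' H2) as [K | (_ & w & K1 & K2)].
    + right; split; eauto.
    + exact (union_rel3_amalg_rel _ _ _ _ t K1 K2 H2').
Qed.

End AmalgRel.

Lemma amalg_rel_cross T a b : not_in_img f a -> not_in_img g b ->
  amalg_rel T (inl a) (inB b) -> T /\ exists c, rA a (f c) /\ rB (g c) b.
Proof.
  intros Na Nb. rewrite (inB_new b Nb). intros [H | (t & z & H1 & H2)].
  - exfalso. destruct (union_rel_same_side _ _ H) as [(a1 & a2 & _ & X) | (b1 & b2 & X & _)];
      simpl in X; auto.
    destruct X as (c & E & _). apply Na; eauto.
  - split; auto.
    destruct (union_rel_same_side _ _ H1) as [(a1 & a2 & X1 & Y1) | (b1 & b2 & X1 & Y1)].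
    2: { exfalso; simpl in X1. destruct X1 as (c & E & _). apply Na; eauto. }
    destruct (union_rel_same_side _ _ H2) as [(a3 & a4 & X2 & Y2) | (b3 & b4 & X2 & Y2)].
    { simpl in Y2; contradiction. }
    destruct (fromA_fromB _ _ _ Y1 X2) as (c & <- & <-). exists c. split.
    + exact (union_rel_A _ _ _ _ H1 eq_refl Y1).
    + exact (union_rel_B _ _ _ _ H2 X2 eq_refl).
Qed.

Lemma amalg_rel_cross' T a b : not_in_img f a -> not_in_img g b ->
  amalg_rel T (inB b) (inl a) -> T /\ exists c, rB b (g c) /\ rA (f c) a.
Proof.
  intros Na Nb. rewrite (inB_new b Nb). intros [H | (t & z & H1 & H2)].
  - exfalso. destruct (union_rel_same_side _ _ H) as [(a1 & a2 & X & _) | (b1 & b2 & _ & X)];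
      simpl in X; auto.
    destruct X as (c & E & _). apply Na; eauto.
  - split; auto.
    destruct (union_rel_same_side _ _ H1) as [(a1 & a2 & X1 & Y1) | (b1 & b2 & X1 & Y1)].
    { simpl in X1; contradiction. }
    destruct (union_rel_same_side _ _ H2) as [(a3 & a4 & X2 & Y2) | (b3 & b4 & X2 & Y2)].
    2: { exfalso; simpl in Y2. destruct Y2 as (c & E & _). apply Na; eauto. }
    destruct (fromA_fromB _ _ _ X2 Y1) as (c & <- & <-). exists c. split.
    + exact (union_rel_B _ _ _ _ H1 eq_refl Y1).
    + exact (union_rel_A _ _ _ _ H2 X2 eq_refl).
Qed.

Lemma amalg_rel_refl T : has_prop Refl rA -> has_prop Refl rB -> has_prop Refl (amalg_rel T).
Proof.
  intros rfA rfB x. left. destruct (amalg_cover x) as [(a & H) | (b & H)]; [left | right]; eauto.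
Qed.

Lemma amalg_rel_inl T a a' : rA a a' -> amalg_rel T (inl a) (inl a').
Proof. intros; left; left; exists a, a'; simpl; auto. Qed.

Lemma amalg_rel_inB T b b' : rB b b' -> amalg_rel T (inB b) (inB b').
Proof. intros; left; right; exists b, b'; auto using fromB_inB. Qed.

End UnionRel.

Lemma union_rel_mono (rA sA : A -> A -> Prop) (rB sB : B -> B -> Prop) x y :
  (forall a a', rA a a' -> sA a a') -> (forall b b', rB b b' -> sB b b') ->
  union_rel rA rB x y -> union_rel sA sB x y.
Proof. intros HA HB [(a & a' & H) | (b & b' & H)]; [left | right]; firstorder. Qed.

Lemma amalg_rel_mono (rA sA : A -> A -> Prop) (rB sB : B -> B -> Prop) (T T' : Prop) x y :
  (forall a a', rA a a' -> sA a a') -> (forall b b', rB b b' -> sB b b') -> (T -> T') ->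
  amalg_rel rA rB T x y -> amalg_rel sA sB T' x y.
Proof.
  intros HA HB HT [H | (t & z & H1 & H2)].
  - left; eapply union_rel_mono; eauto.
  - right; split; auto; exists z; split; eapply union_rel_mono; eauto.
Qed.

Lemma amalg_rel_sym (rA : A -> A -> Prop) (rB : B -> B -> Prop) T :
  has_prop Symm rA -> has_prop Symm rB -> has_prop Symm (amalg_rel rA rB T).
Proof.
  intros sA sB x y.
  assert (U : forall x y, union_rel rA rB x y -> union_rel rA rB y x)
    by (intros ? ? [(a & a' & H) | (b & b' & H)]; [left | right]; firstorder).
  intros [H | (t & z & H1 & H2)]; [left; auto | right; split; eauto].
Qed.

Definition amalg_op (k : I) (x : amalg) : amalg :=
  match x with inl a => inl (op A k a) | inr b => inB (op B k (proj1_sig b)) end.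

Lemma fromA_op k x a : fromA x a -> fromA (amalg_op k x) (op A k a).
Proof. destruct x; simpl; intros; subst; auto; contradiction. Qed.

Lemma fromB_op k x b : fromB x b -> fromB (amalg_op k x) (op B k b).
Proof.
  destruct x as [a | [b0 H0]]; simpl.
  - intros (c & <- & <-). exists (op C k c). rewrite f_op, g_op; auto.
  - intros <-. apply fromB_inB.
Qed.

Lemma amalg_op_inB k b : amalg_op k (inB b) = inB (op B k b).
Proof. apply (fromB_inj _ _ (op B k b)); [apply fromB_op, fromB_inB | apply fromB_inB]. Qed.

Section Operations.
Variables (rA : A -> A -> Prop) (rB : B -> B -> Prop) (k : I).

Lemma union_rel_pres : preserving rA (op A k) -> preserving rB (op B k) ->
  preserving (union_rel rA rB) (amalg_op k).
Proof.
  intros pA pB x y [(a & a' & H1 & H2 & H3) | (b & b' & H1 & H2 & H3)].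
  - left; exists (op A k a), (op A k a'); auto using fromA_op.
  - right; exists (op B k b), (op B k b'); auto using fromB_op.
Qed.

Lemma union_rel_rev : reversing rA (op A k) -> reversing rB (op B k) ->
  reversing (union_rel rA rB) (amalg_op k).
Proof.
  intros pA pB x y [(a & a' & H1 & H2 & H3) | (b & b' & H1 & H2 & H3)].
  - left; exists (op A k a'), (op A k a); auto using fromA_op.
  - right; exists (op B k b'), (op B k b); auto using fromB_op.
Qed.

Lemma amalg_rel_pres T : preserving rA (op A k) -> preserving rB (op B k) ->
  preserving (amalg_rel rA rB T) (amalg_op k).
Proof.
  intros pA pB x y [H | (t & z & H1 & H2)].
  - left; apply union_rel_pres; auto.
  - right; split; auto; exists (amalg_op k z); split; apply union_rel_pres; auto.
Qed.

Lemma amalg_rel_rev T : reversing rA (op A k) -> reversing rB (op B k) ->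
  reversing (amalg_rel rA rB T) (amalg_op k).
Proof.
  intros pA pB x y [H | (t & z & H1 & H2)].
  - left; apply union_rel_rev; auto.
  - right; split; auto; exists (amalg_op k z); split; apply union_rel_rev; auto.
Qed.

End Operations.

Section KkindAmalgam.
Variables (P Q : rprop -> Prop) (kind : I -> op_kind).
Hypothesis KA : Kkind P Q kind A.
Hypothesis KB : Kkind P Q kind B.
Hypothesis fg_R : forall c c', rR A (f c) (f c') <-> rR B (g c) (g c').
Hypothesis fg_S : forall c c', rS A (f c) (f c') <-> rS B (g c) (g c').

Lemma A_R p : P p -> has_prop p (rR A). Proof. apply KA. Qed.
Lemma B_R p : P p -> has_prop p (rR B). Proof. apply KB. Qed.
Lemma A_S q : Q q -> has_prop q (rS A). Proof. apply KA. Qed.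
Lemma B_S q : Q q -> has_prop q (rS B). Proof. apply KB. Qed.
Lemma A_RS x y : rR A x y -> rS A x y. Proof. apply KA. Qed.
Lemma B_RS x y : rR B x y -> rS B x y. Proof. apply KB. Qed.

Definition amalg_R : amalg -> amalg -> Prop := amalg_rel (rR A) (rR B) (P Trans).
Definition amalg_S_core : amalg -> amalg -> Prop := amalg_rel (rS A) (rS B) (Q Trans).

(* [S] has to contain [R], whose two-step paths are missing from [amalg_S_core] when [S] is
   not transitive; symmetry then requires the converse of [R] as well. *)
Definition amalg_S (x y : amalg) : Prop :=
  amalg_S_core x y \/ amalg_R x y \/ (Q Symm /\ amalg_R y x).

Lemma amalg_R_A : restricts_to_A amalg_R (rR A).
Proof. apply amalg_rel_A; auto. intros t; split; [apply A_R | apply B_R]; exact t. Qed.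

Lemma amalg_R_B : restricts_to_B amalg_R (rR B).
Proof. apply amalg_rel_B; auto. intros t; split; [apply A_R | apply B_R]; exact t. Qed.

Lemma amalg_S_core_A : restricts_to_A amalg_S_core (rS A).
Proof. apply amalg_rel_A; auto. intros t; split; [apply A_S | apply B_S]; exact t. Qed.

Lemma amalg_S_core_B : restricts_to_B amalg_S_core (rS B).
Proof. apply amalg_rel_B; auto. intros t; split; [apply A_S | apply B_S]; exact t. Qed.

Lemma amalg_S_A : restricts_to_A amalg_S (rS A).
Proof.
  intros x y a a' [H | [H | (s & H)]] Ha Ha'.
  - exact (amalg_S_core_A _ _ _ _ H Ha Ha').
  - exact (A_RS _ _ (amalg_R_A _ _ _ _ H Ha Ha')).
  - exact (A_S Symm s _ _ (A_RS _ _ (amalg_R_A _ _ _ _ H Ha' Ha))).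
Qed.

Lemma amalg_S_B : restricts_to_B amalg_S (rS B).
Proof.
  intros x y b b' [H | [H | (s & H)]] Hb Hb'.
  - exact (amalg_S_core_B _ _ _ _ H Hb Hb').
  - exact (B_RS _ _ (amalg_R_B _ _ _ _ H Hb Hb')).
  - exact (B_S Symm s _ _ (B_RS _ _ (amalg_R_B _ _ _ _ H Hb' Hb))).
Qed.

Lemma amalg_S_sub_core x y : Q Trans -> amalg_S x y -> amalg_S_core x y.
Proof.
  intros tq.
  assert (RS : forall x y, amalg_R x y -> amalg_S_core x y)
    by (intros ? ?; apply amalg_rel_mono; auto using A_RS, B_RS).
  intros [H | [H | (s & H)]]; auto.
  apply amalg_rel_sym; [apply A_S | apply B_S | apply RS]; auto.
Qed.

Lemma amalg_S_cross a b : not_in_img f a -> not_in_img g b ->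
  amalg_S (inl a) (inB b) -> exists c, rS A a (f c) /\ rS B (g c) b.
Proof.
  intros Na Nb [H | [H | (s & H)]].
  - destruct (amalg_rel_cross _ _ fg_S _ _ _ Na Nb H) as (_ & c & h1 & h2); eauto.
  - destruct (amalg_rel_cross _ _ fg_R _ _ _ Na Nb H) as (_ & c & h1 & h2).
    exists c; auto using A_RS, B_RS.
  - destruct (amalg_rel_cross' _ _ fg_R _ _ _ Na Nb H) as (_ & c & h1 & h2).
    exists c; split; [apply (A_S Symm s) | apply (B_S Symm s)]; auto using A_RS, B_RS.
Qed.

Lemma amalg_S_cross' a b : not_in_img f a -> not_in_img g b ->
  amalg_S (inB b) (inl a) -> exists c, rS B b (g c) /\ rS A (f c) a.
Proof.
  intros Na Nb [H | [H | (s & H)]].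
  - destruct (amalg_rel_cross' _ _ fg_S _ _ _ Na Nb H) as (_ & c & h1 & h2); eauto.
  - destruct (amalg_rel_cross' _ _ fg_R _ _ _ Na Nb H) as (_ & c & h1 & h2).
    exists c; auto using A_RS, B_RS.
  - destruct (amalg_rel_cross _ _ fg_R _ _ _ Na Nb H) as (_ & c & h1 & h2).
    exists c; split; [apply (B_S Symm s) | apply (A_S Symm s)]; auto using A_RS, B_RS.
Qed.

Lemma amalg_S_cross_antisym a b : Q Antisym -> not_in_img f a -> not_in_img g b ->
  amalg_S (inl a) (inB b) -> amalg_S (inB b) (inl a) -> False.
Proof.
  intros asq Na Nb H1 H2. apply Na.
  destruct (classic (Q Symm)) as [sq | nsq].
  { destruct (amalg_S_cross a b Na Nb H1) as (c & h1 & _).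
    exists c. apply (A_S Antisym asq); auto. apply (A_S Symm sq); auto. }
  destruct (classic (Q Trans)) as [tq | ntq].
  { apply amalg_S_sub_core in H1, H2; auto.
    destruct (amalg_rel_cross _ _ fg_S _ _ _ Na Nb H1) as (_ & c & h1 & h2).
    destruct (amalg_rel_cross' _ _ fg_S _ _ _ Na Nb H2) as (_ & c' & h3 & h4).
    exists c. symmetry. apply (cross_cycle (rS A) (rS A) (rS B) a b c c'); auto using A_S, B_S. }
  destruct H1 as [H1 | [H1 | (s & _)]]; [| | tauto].
  { destruct (amalg_rel_cross _ _ fg_S _ _ _ Na Nb H1); tauto. }
  destruct H2 as [H2 | [H2 | (s & _)]]; [| | tauto].
  { destruct (amalg_rel_cross' _ _ fg_S _ _ _ Na Nb H2); tauto. }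
  destruct (amalg_rel_cross _ _ fg_R _ _ _ Na Nb H1) as (tp & c & h1 & h2).
  destruct (amalg_rel_cross' _ _ fg_R _ _ _ Na Nb H2) as (_ & c' & h3 & h4).
  exists c. symmetry.
  apply (cross_cycle (rR A) (rS A) (rR B) a b c c'); auto using A_R, B_R, A_RS, A_S.
Qed.

Lemma amalg_R_props p : P p -> has_prop p amalg_R.
Proof.
  intros Pp; destruct p.
  - apply amalg_rel_trans; auto. intros t; split; [apply A_R | apply B_R]; exact t.
  - apply amalg_rel_refl; [apply A_R | apply B_R]; exact Pp.
  - apply amalg_rel_sym; [apply A_R | apply B_R]; exact Pp.
  - apply (amalg_irrefl _ _ _ amalg_R_A amalg_R_B); [apply A_R | apply B_R]; exact Pp.
  - apply (amalg_antisym _ _ _ amalg_R_A amalg_R_B); [apply A_R | apply B_R | ]; [exact Pp .. |].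
    intros a b Na Nb H1 H2. apply Na.
    destruct (amalg_rel_cross _ _ fg_R _ _ _ Na Nb H1) as (tp & c & h1 & h2).
    destruct (amalg_rel_cross' _ _ fg_R _ _ _ Na Nb H2) as (_ & c' & h3 & h4).
    exists c. symmetry. apply (cross_cycle (rR A) (rR A) (rR B) a b c c'); auto using A_R, B_R.
Qed.

Lemma amalg_S_props q : Q q -> has_prop q amalg_S.
Proof.
  intros Qq; destruct q.
  - intros x y z H1 H2. left.
    apply amalg_S_sub_core in H1, H2; auto.
    revert H1 H2; apply amalg_rel_trans; auto.
    intros t; split; [apply A_S | apply B_S]; exact t.
  - intros x. left. apply amalg_rel_refl; [apply A_S | apply B_S]; exact Qq.
  - intros x y [H | [H | (_ & H)]].
    + left. revert H; apply amalg_rel_sym; [apply A_S | apply B_S]; exact Qq.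
    + right; right; auto.
    + right; left; auto.
  - apply (amalg_irrefl _ _ _ amalg_S_A amalg_S_B); [apply A_S | apply B_S]; exact Qq.
  - apply (amalg_antisym _ _ _ amalg_S_A amalg_S_B); [apply A_S | apply B_S | ]; [exact Qq .. |].
    intros a b; apply amalg_S_cross_antisym; exact Qq.
Qed.

Lemma amalg_op_kind k :
  kind_R (kind k) amalg_R (amalg_op k) /\ kind_S (kind k) amalg_S (amalg_op k).
Proof.
  destruct (proj2 KA k) as (oRA & oSA), (proj2 KB k) as (oRB & oSB).
  unfold amalg_R, amalg_S, amalg_S_core.
  destruct (kind k); simpl in *; split; auto using amalg_rel_pres, amalg_rel_rev.
  - intros x y [H | [H | (s & H)]]; [left | right; left | right; right; split];
      auto; revert H; apply amalg_rel_pres; auto.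
  - intros x y [H | [H | (s & H)]]; [left | right; left | right; right; split];
      auto; revert H; apply amalg_rel_rev; auto.
Qed.

Definition amalgam : Str I := mkStr amalg amalg_R amalg_S amalg_op.

Lemma Kkind_amalgam : Kkind P Q kind amalgam.
Proof.
  split; [split; [| split] |].
  - exact amalg_R_props.
  - exact amalg_S_props.
  - intros x y H; right; left; exact H.
  - exact amalg_op_kind.
Qed.

Lemma emb_inl : @emb I A amalgam inl.
Proof.
  repeat split; simpl.
  - intros x y H; injection H; auto.
  - apply amalg_rel_inl.
  - intros H. exact (amalg_R_A _ _ _ _ H eq_refl eq_refl).
  - intros H. left. apply amalg_rel_inl; exact H.
  - intros H. exact (amalg_S_A _ _ _ _ H eq_refl eq_refl).
Qed.

Lemma emb_inB : @emb I B amalgam inB.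
Proof.
  repeat split; simpl.
  - intros x y H. apply (fromB_fun (inB x)); [apply fromB_inB | rewrite H; apply fromB_inB].
  - apply amalg_rel_inB.
  - intros H. exact (amalg_R_B _ _ _ _ H (fromB_inB x) (fromB_inB y)).
  - intros H. left. apply amalg_rel_inB; exact H.
  - intros H. exact (amalg_S_B _ _ _ _ H (fromB_inB x) (fromB_inB y)).
  - intros k x. symmetry. apply amalg_op_inB.
Qed.

End KkindAmalgam.
End Amalgam.

Lemma emb_rel_comm {I} {A B C : Str I} (f : C -> A) (g : C -> B) :
  emb f -> emb g ->
  (forall c c', rR A (f c) (f c') <-> rR B (g c) (g c')) /\
  (forall c c', rS A (f c) (f c') <-> rS B (g c) (g c')).
Proof.
  intros (_ & fR & fS & _) (_ & gR & gS & _).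
  split; intros c c'; rewrite <- ?fR, <- ?gR, <- ?fS, <- ?gS; tauto.
Qed.

Theorem superSAP_Kkind {I} (P Q : rprop -> Prop) (kind : I -> op_kind) :
  superSAP_RS (Kkind P Q kind).
Proof.
  intros A B C f g KA KB KC ef eg.
  destruct (emb_rel_comm f g ef eg) as [fg_R fg_S].
  destruct ef as (f_inj & _ & _ & f_op), eg as (g_inj & _ & _ & g_op).
  exists (amalgam A B C f g P Q), inl, (inB A B C f g).
  split; [exact (Kkind_amalgam A B C f g f_inj g_inj f_op g_op P Q kind KA KB fg_R fg_S) |].
  split; [exact (emb_inl A B C f g f_inj P Q kind KA KB fg_R fg_S) |].
  split; [exact (emb_inB A B C f g f_inj g_inj f_op g_op P Q kind KA KB fg_R fg_S) |].
  split; [exact (inl_inB A B C f g g_inj) |].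
  split; [exact (inl_inB_inv A B C f g) |].
  intros [] a b Na Nb; simpl; split; intros H.
  - destruct (amalg_rel_cross A B C f g f_inj g_inj _ _ fg_R _ a b Na Nb H) as (_ & h); exact h.
  - destruct (amalg_rel_cross' A B C f g f_inj g_inj _ _ fg_R _ a b Na Nb H) as (_ & h); exact h.
  - exact (amalg_S_cross A B C f g f_inj g_inj P Q kind KA KB fg_R fg_S a b Na Nb H).
  - exact (amalg_S_cross' A B C f g f_inj g_inj P Q kind KA KB fg_R fg_S a b Na Nb H).
Qed.

(** * Countability and finiteness *)

Lemma sig_eq {T} {P : T -> Prop} (u v : {t | P t}) : proj1_sig u = proj1_sig v -> u = v.
Proof. apply eq_sig_hprop; intros; apply proof_irrelevance. Qed.

Definition some_or {T} (d : T) (P : T -> Prop) : T :=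
  match excluded_middle_informative (exists x, P x) with
  | left h => proj1_sig (constructive_indefinite_description P h)
  | right _ => d
  end.

Lemma some_or_spec {T} (d : T) (P : T -> Prop) : (exists x, P x) -> P (some_or d P).
Proof.
  intros H; unfold some_or; destruct excluded_middle_informative as [h | h]; [| contradiction].
  apply proj2_sig.
Qed.

Lemma some_or_cases {T} (d : T) (P : T -> Prop) : P (some_or d P) \/ some_or d P = d.
Proof.
  unfold some_or; destruct excluded_middle_informative as [h | h]; [left | right; auto].
  apply proj2_sig.
Qed.

Lemma extend_along_inj {T} (v w : T -> nat) :
  (forall x y, v x = v y -> x = y) -> exists E : nat -> nat, forall x, E (v x) = w x.
Proof.
  intros vinj. exists (fun y => some_or 0 (fun m => exists x, v x = y /\ w x = m)).
  intros x. destruct (some_or_spec 0 (fun m => exists x', v x' = v x /\ w x' = m))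
    as (x' & E & <-); eauto.
  rewrite (vinj _ _ E). reflexivity.
Qed.

Definition enumerable (T : Type) : Prop := exists e : nat -> T, forall t, exists n, e n = t.

Lemma enumerable_nat : enumerable nat.
Proof. exists (fun n => n); eauto. Qed.

Lemma enumerable_prod {A B} : enumerable A -> enumerable B -> enumerable (A * B).
Proof.
  intros [ea Ha] [eb Hb].
  exists (fun n => (ea (fst (of_nat n)), eb (snd (of_nat n)))).
  intros [a b]. destruct (Ha a) as [n <-], (Hb b) as [m <-].
  exists (to_nat (n, m)). rewrite cancel_of_to; reflexivity.
Qed.

(* [fuel] bounds the recursion; [S n] is always enough fuel for [n]. *)
Fixpoint nat_to_list (fuel n : nat) : list nat :=
  match fuel, n with
  | S fuel', S n' => fst (of_nat n') :: nat_to_list fuel' (snd (of_nat n'))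
  | _, _ => []
  end.

Fixpoint list_to_nat (l : list nat) : nat :=
  match l with [] => 0 | a :: r => S (to_nat (a, list_to_nat r)) end.

Lemma nat_to_list_to_nat l fuel : list_to_nat l < fuel -> nat_to_list fuel (list_to_nat l) = l.
Proof.
  revert fuel; induction l as [| a r IH]; intros [| fuel] H; cbn [list_to_nat] in *; try lia;
    [reflexivity |].
  cbn [nat_to_list]. rewrite cancel_of_to. f_equal. apply IH.
  pose proof (to_nat_non_decreasing a (list_to_nat r)). lia.
Qed.

Lemma enumerable_list {A} : enumerable A -> enumerable (list A).
Proof.
  intros [e He]. exists (fun n => map e (nat_to_list (S n) n)).
  assert (lift : forall l : list A, exists ln, map e ln = l).
  { induction l as [| a r [ln IH]]; [exists []; auto |].
    destruct (He a) as [k Hk]. exists (k :: ln); simpl; congruence. }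
  intros l. destruct (lift l) as [ln <-].
  exists (list_to_nat ln). rewrite nat_to_list_to_nat; auto.
Qed.

Lemma finite_NoDup T : finite_type T -> exists l : list T, NoDup l /\ forall x, In x l.
Proof.
  intros [l H]. exists (nodup (fun x y => excluded_middle_informative (x = y)) l).
  split; [apply NoDup_nodup | intros x; apply nodup_In; auto].
Qed.

Lemma finite_inj {T A} (f : T -> A) (l : list A) :
  (forall t, In (f t) l) -> (forall x y, f x = f y -> x = y) -> finite_type T.
Proof.
  intros Hl Hf. destruct (classic (inhabited T)) as [[t0] | E].
  - exists (map (fun a => some_or t0 (fun t => f t = a)) l).
    intros t. apply in_map_iff. exists (f t). split; auto.
    apply Hf, (some_or_spec t0 (fun t' => f t' = f t)); eauto.
  - exists []. intros t; apply E; constructor; exact t.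
Qed.

Fixpoint lookup (tbl : list (nat * nat)) (x : nat) : nat :=
  match tbl with [] => 0 | (a, b) :: r => if Nat.eqb a x then b else lookup r x end.

Lemma lookup_graph (F : nat -> nat) s n x :
  s <= x < s + n -> lookup (map (fun y => (y, F y)) (seq s n)) x = F x.
Proof.
  revert s; induction n as [| n IH]; intros s H; [lia |]. simpl.
  destruct (Nat.eqb_spec s x); [subst; auto | apply IH; lia].
Qed.

Fixpoint index_of (x : nat) (l : list nat) : nat :=
  match l with [] => 0 | a :: r => if Nat.eqb a x then 0 else S (index_of x r) end.

Lemma index_of_spec x l : In x l -> index_of x l < length l /\ nth (index_of x l) l 0 = x.
Proof.
  induction l as [| a r IH]; simpl; [tauto |]. intros H.
  destruct (Nat.eqb_spec a x); [split; auto; lia |].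
  destruct H as [H | H]; [congruence |]. destruct (IH H); split; auto; lia.
Qed.

Lemma emb_id {I} (A : Str I) : emb (fun x : A => x).
Proof. repeat split; auto. Qed.

Lemma emb_comp {I} {A B C : Str I} (h : A -> B) (k : B -> C) :
  emb h -> emb k -> emb (fun x => k (h x)).
Proof.
  intros (h1 & h2 & h3 & h4) (k1 & k2 & k3 & k4). split; [| split; [| split]].
  - intros x y E; apply h1, k1, E.
  - intros x y; rewrite h2, k2; tauto.
  - intros x y; rewrite h3, k3; tauto.
  - intros i x; rewrite h4, k4; auto.
Qed.

Lemma iso_inv {I} {A B : Str I} (h : A -> B) : iso h ->
  exists h' : B -> A, emb h' /\ (forall y, h (h' y) = y) /\ (forall x, h' (h x) = x).
Proof.
  intros ((hinj & hR & hS & hop) & hsur).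
  destruct (choice _ hsur) as [h' K].
  assert (K' : forall x, h' (h x) = x) by (intros x; apply hinj, K).
  exists h'. split; [| split; auto].
  split; [| split; [| split]].
  - intros x y E. rewrite <- (K x), <- (K y), E; auto.
  - intros x y. rewrite hR, !K; tauto.
  - intros x y. rewrite hS, !K; tauto.
  - intros i x. apply hinj. rewrite K, hop, K. auto.
Qed.

(** * Structures on initial segments of [nat] *)

Record NatStr (I : Type) := {
  nsize : nat;
  nR : nat -> nat -> Prop;
  nS : nat -> nat -> Prop;
  nop : I -> nat -> nat;
  nop_lt : forall i x, x < nsize -> nop i x < nsize }.
Arguments nsize {I} _.
Arguments nR {I} _ _ _.
Arguments nS {I} _ _ _.
Arguments nop {I} _ _ _.
Arguments nop_lt {I} _ _ _ _.

Definition to_str {I} (F : NatStr I) : Str I :=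
  mkStr {x : nat | x < nsize F}
    (fun x y => nR F (proj1_sig x) (proj1_sig y))
    (fun x y => nS F (proj1_sig x) (proj1_sig y))
    (fun i x => exist _ (nop F i (proj1_sig x)) (nop_lt F i _ (proj2_sig x))).

Definition nat_emb {I} (F G : NatStr I) (h : nat -> nat) : Prop :=
  (forall x, x < nsize F -> h x < nsize G) /\
  (forall x y, x < nsize F -> y < nsize F -> h x = h y -> x = y) /\
  (forall x y, x < nsize F -> y < nsize F -> (nR F x y <-> nR G (h x) (h y))) /\
  (forall x y, x < nsize F -> y < nsize F -> (nS F x y <-> nS G (h x) (h y))) /\
  (forall i x, x < nsize F -> h (nop F i x) = nop G i (h x)).

Definition lift_nat_map {I} (F G : NatStr I) (h : nat -> nat)
    (H : forall x, x < nsize F -> h x < nsize G) : to_str F -> to_str G :=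
  fun x => exist _ (h (proj1_sig x)) (H _ (proj2_sig x)).

Lemma emb_lift_nat_map {I} (F G : NatStr I) h (E : nat_emb F G h) :
  emb (lift_nat_map F G h (proj1 E)).
Proof.
  destruct E as (e1 & e2 & e3 & e4 & e5). split; [| split; [| split]]; simpl.
  - intros [x px] [y py] H. apply sig_eq, e2; auto. exact (f_equal (@proj1_sig _ _) H).
  - intros [x px] [y py]; simpl; auto.
  - intros [x px] [y py]; simpl; auto.
  - intros i [x px]. apply sig_eq; simpl; auto.
Qed.

Section Coding.
Variable I : Type.
Variable lI : list I.
Hypothesis lI_full : forall i, In i lI.

Definition op_index (i : I) : nat :=
  proj1_sig (constructive_indefinite_description _ (In_nth_error lI i (lI_full i))).

Lemma op_index_spec i : nth_error lI (op_index i) = Some i.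
Proof. unfold op_index; destruct constructive_indefinite_description; auto. Qed.

(* Size, the pairs in [R], the pairs in [S], and the value tables of the operations
   listed in the order of [lI]. *)
Definition str_code : Type := (nat * list (nat * nat) * list (nat * nat) * list (list nat))%type.

Lemma enumerable_str_code : enumerable str_code.
Proof.
  repeat apply enumerable_prod; auto using enumerable_nat, enumerable_list, enumerable_prod.
Qed.

(* Out-of-range table entries are replaced by [0], so that every code decodes. *)
Definition decode_op (m : nat) (tbl : list (list nat)) (i : I) (x : nat) : nat :=
  let y := nth x (nth (op_index i) tbl []) 0 in if y <? m then y else 0.

Lemma decode_op_lt m tbl i x : x < m -> decode_op m tbl i x < m.
Proof.
  unfold decode_op; intros H.
  destruct (Nat.ltb_spec (nth x (nth (op_index i) tbl []) 0) m); lia.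
Qed.

Definition decode (c : str_code) : NatStr I :=
  match c with (m, lR, lS, tbl) =>
    {| nsize := m; nR := fun x y => In (x, y) lR; nS := fun x y => In (x, y) lS;
       nop := decode_op m tbl; nop_lt := decode_op_lt m tbl |} end.

Definition rel_table (m : nat) (r : nat -> nat -> Prop) : list (nat * nat) :=
  filter (fun p => if excluded_middle_informative (r (fst p) (snd p)) then true else false)
    (list_prod (seq 0 m) (seq 0 m)).

Lemma In_rel_table m r x y : x < m -> y < m -> (In (x, y) (rel_table m r) <-> r x y).
Proof.
  intros Hx Hy. unfold rel_table. rewrite filter_In, in_prod_iff, !in_seq; simpl.
  destruct excluded_middle_informative; split; intuition (try lia; try discriminate).
Qed.

Definition op_table (m : nat) (o : I -> nat -> nat) : list (list nat) :=
  map (fun d => match nth_error lI d with Some i => map (o i) (seq 0 m) | None => [] end)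
    (seq 0 (length lI)).

Lemma decode_op_table m o i x : x < m -> o i x < m -> decode_op m (op_table m o) i x = o i x.
Proof.
  intros Hx Ho. unfold decode_op.
  assert (Hi : op_index i < length lI)
    by (apply nth_error_Some; rewrite op_index_spec; discriminate).
  assert (row : nth (op_index i) (op_table m o) [] = map (o i) (seq 0 m)).
  { apply nth_error_nth. unfold op_table.
    rewrite nth_error_map, nth_error_seq. apply Nat.ltb_lt in Hi; rewrite Hi; simpl.
    rewrite op_index_spec; reflexivity. }
  assert (entry : nth x (map (o i) (seq 0 m)) 0 = o i x).
  { apply nth_error_nth. rewrite nth_error_map, nth_error_seq.
    apply Nat.ltb_lt in Hx; rewrite Hx; reflexivity. }
  rewrite row, entry. destruct (Nat.ltb_spec (o i x) m); lia.
Qed.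

Lemma finite_str_coded (B : Str I) : finite_type B ->
  exists (c : str_code) (phi : to_str (decode c) -> B), iso phi.
Proof.
  intros HB. destruct (finite_NoDup _ HB) as [lB [ND AL]].
  destruct lB as [| b0 lB'] eqn:ElB.
  { exists (0, [], [], []), (fun x => False_rect _ (Nat.nlt_0_r _ (proj2_sig x))).
    split; [split; [| split; [| split]] | intros b; destruct (AL b)];
      intros ? [x px]; simpl in px; lia. }
  rewrite <- ElB in *. set (m := length lB). set (elem x := nth x lB b0).
  set (pos b := some_or 0 (fun p => p < m /\ elem p = b)).
  assert (pos_spec : forall b, pos b < m /\ elem (pos b) = b).
  { intros b. apply some_or_spec. destruct (In_nth lB b b0 (AL b)) as [n [H1 H2]]. eauto. }
  assert (elem_inj : forall x y, x < m -> y < m -> elem x = elem y -> x = y)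
    by (intros x y Hx Hy E; eapply NoDup_nth; eauto).
  set (o i x := pos (op B i (elem x))).
  exists (m, rel_table m (fun x y => rR B (elem x) (elem y)),
    rel_table m (fun x y => rS B (elem x) (elem y)), op_table m o).
  exists (fun x => elem (proj1_sig x)).
  split; [split; [| split; [| split]] |]; simpl.
  - intros [x px] [y py] E; apply sig_eq, elem_inj; auto.
  - intros [x px] [y py]; apply In_rel_table; auto.
  - intros [x px] [y py]; apply In_rel_table; auto.
  - intros i [x px]; simpl. rewrite decode_op_table by (exact px || apply pos_spec). apply pos_spec.
  - intros b. exists (exist _ (pos b) (proj1 (pos_spec b))). apply pos_spec.
Qed.

End Coding.

Definition extends {I} (F F' : NatStr I) : Prop :=
  nsize F <= nsize F' /\
  (forall x y, x < nsize F -> y < nsize F ->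
     (nR F x y <-> nR F' x y) /\ (nS F x y <-> nS F' x y)) /\
  (forall k x, x < nsize F -> nop F' k x = nop F k x).

Lemma extends_refl {I} (F : NatStr I) : extends F F.
Proof. split; [lia | split; [tauto | auto]]. Qed.

Lemma extends_trans {I} (F1 F2 F3 : NatStr I) : extends F1 F2 -> extends F2 F3 -> extends F1 F3.
Proof.
  intros (a1 & b1 & c1) (a2 & b2 & c2). split; [lia | split].
  - intros x y Hx Hy. destruct (b1 x y Hx Hy), (b2 x y); try lia. tauto.
  - intros k x Hx. rewrite c2 by lia. auto.
Qed.

(* An amalgam [D] of a stage [F] and of [B] over a common part is pulled back to an initial
   segment of [nat]: the points of [F] keep their numbers, and the points of [B] outside the
   common part are numbered after them. *)
Section StageAmalgam.
Variable I : Type.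
Variables (F B : NatStr I) (D : Str I) (i : to_str F -> D) (j : to_str B -> D).
Hypotheses (ei : emb i) (ej : emb j).

Local Notation n := (nsize F).
Local Notation m := (nsize B).

Definition shared (b : nat) : Prop :=
  exists a (pa : a < n) (q : b < m), i (exist _ a pa) = j (exist _ b q).

Definition fresh_pts : list nat :=
  filter (fun b => if excluded_middle_informative (shared b) then false else true) (seq 0 m).

Lemma In_fresh_pts b : In b fresh_pts <-> b < m /\ ~ shared b.
Proof.
  unfold fresh_pts. rewrite filter_In, in_seq.
  destruct excluded_middle_informative; split; intuition (try lia; try discriminate).
Qed.

Definition ext_size := n + length fresh_pts.

Lemma fresh_lt x : x < ext_size -> ~ x < n -> nth (x - n) fresh_pts 0 < m.
Proof. intros H q. apply In_fresh_pts, nth_In. unfold ext_size in H. lia. Qed.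

Definition ext_pt (x : nat) (H : x < ext_size) : D :=
  match lt_dec x n with
  | left p => i (exist _ x p)
  | right q => j (exist _ (nth (x - n) fresh_pts 0) (fresh_lt x H q))
  end.

Lemma ext_pt_irr x H H' : ext_pt x H = ext_pt x H'.
Proof. f_equal. apply proof_irrelevance. Qed.

Lemma ext_pt_old x (p : x < n) H : ext_pt x H = i (exist _ x p).
Proof. unfold ext_pt. destruct (lt_dec x n); [| contradiction]. f_equal; apply sig_eq; auto. Qed.

Definition ext_index (b : nat) : nat :=
  if excluded_middle_informative (shared b)
  then some_or 0 (fun a => exists (pa : a < n) (q : b < m), i (exist _ a pa) = j (exist _ b q))
  else n + index_of b fresh_pts.

Lemma ext_index_lt b : b < m -> ext_index b < ext_size.
Proof.
  intros Hb. unfold ext_index, ext_size. destruct excluded_middle_informative as [h | h].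
  - destruct (some_or_spec 0 _ h) as (pa & _); lia.
  - destruct (index_of_spec b fresh_pts) as [h1 _]; [apply In_fresh_pts; auto | lia].
Qed.

Lemma ext_pt_index b (q : b < m) (H : ext_index b < ext_size) :
  ext_pt (ext_index b) H = j (exist _ b q).
Proof.
  revert H. unfold ext_index. destruct excluded_middle_informative as [h | h]; intros H.
  - destruct (some_or_spec 0 _ h) as (pa & q' & E).
    rewrite (ext_pt_old _ pa), E. f_equal; apply sig_eq; auto.
  - assert (Hin : In b fresh_pts) by (apply In_fresh_pts; auto).
    destruct (index_of_spec b fresh_pts Hin) as [h1 h2].
    unfold ext_pt. destruct (lt_dec (n + index_of b fresh_pts) n) as [p | p]; [lia |].
    f_equal. apply sig_eq; simpl. rewrite <- h2 at 2. f_equal; lia.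
Qed.

Lemma ext_pt_inj x y H H' : ext_pt x H = ext_pt y H' -> x = y.
Proof.
  destruct ei as (iinj & _), ej as (jinj & _).
  assert (fresh_new : forall z (Hz : z < ext_size) (q : ~ z < n) a (pa : a < n),
             i (exist _ a pa) <> j (exist (fun b => b < m) _ (fresh_lt z Hz q))).
  { intros z Hz q a pa E.
    assert (Hin : In (nth (z - n) fresh_pts 0) fresh_pts)
      by (apply nth_In; unfold ext_size in Hz; lia).
    apply In_fresh_pts in Hin. apply (proj2 Hin). exists a, pa. eexists. exact E. }
  unfold ext_pt. destruct (lt_dec x n) as [p | p], (lt_dec y n) as [p' | p']; intros E.
  - exact (f_equal (@proj1_sig _ _) (iinj _ _ E)).
  - exfalso; exact (fresh_new _ _ _ _ _ E).
  - exfalso; exact (fresh_new _ _ _ _ _ (eq_sym E)).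
  - apply jinj in E. apply (f_equal (@proj1_sig _ _)) in E; simpl in E.
    assert (x - n = y - n); [| lia].
    apply (proj1 (NoDup_nth fresh_pts 0)); [apply NoDup_filter, seq_NoDup | | | exact E];
      unfold ext_size in *; lia.
Qed.

Definition ext_op (k : I) (x : nat) : nat :=
  if x <? n then nop F k x
  else if x <? ext_size then ext_index (nop B k (nth (x - n) fresh_pts 0)) else 0.

Lemma ext_op_lt k x : x < ext_size -> ext_op k x < ext_size.
Proof.
  intros H. unfold ext_op. destruct (Nat.ltb_spec x n).
  - pose proof (nop_lt F k x H0). unfold ext_size; lia.
  - destruct (Nat.ltb_spec x ext_size); [| lia].
    apply ext_index_lt, nop_lt, fresh_lt; auto; lia.
Qed.

Lemma ext_pt_op k x (H : x < ext_size) :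
  ext_pt (ext_op k x) (ext_op_lt k x H) = op D k (ext_pt x H).
Proof.
  destruct ei as (_ & _ & _ & iop), ej as (_ & _ & _ & jop).
  generalize (ext_op_lt k x H). unfold ext_op. destruct (Nat.ltb_spec x n) as [p | p]; intros Hy.
  - rewrite (ext_pt_old _ p), (ext_pt_old _ (nop_lt F k x p)), <- iop.
    f_equal; apply sig_eq; auto.
  - revert Hy. destruct (Nat.ltb_spec x ext_size) as [p3 | p3]; [| lia]. intros Hy.
    assert (q : nop B k (nth (x - n) fresh_pts 0) < m)
      by (apply nop_lt, fresh_lt; [exact p3 | lia]).
    rewrite (ext_pt_index _ q Hy).
    unfold ext_pt. destruct (lt_dec x n) as [p4 | p4]; [lia |].
    rewrite <- jop. f_equal; apply sig_eq; auto.
Qed.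

Definition ext_stage : NatStr I :=
  {| nsize := ext_size;
     nR := fun x y => exists hx hy, rR D (ext_pt x hx) (ext_pt y hy);
     nS := fun x y => exists hx hy, rS D (ext_pt x hx) (ext_pt y hy);
     nop := ext_op; nop_lt := ext_op_lt |}.

Definition ext_stage_map (x : to_str ext_stage) : D := ext_pt (proj1_sig x) (proj2_sig x).

Lemma ext_stage_rel (r : D -> D -> Prop) x y (hx : x < ext_size) (hy : y < ext_size) :
  (exists hx hy, r (ext_pt x hx) (ext_pt y hy)) <-> r (ext_pt x hx) (ext_pt y hy).
Proof.
  split; [intros (hx' & hy' & h) | intros h; eauto].
  rewrite (ext_pt_irr x hx' hx), (ext_pt_irr y hy' hy) in h; exact h.
Qed.

Lemma emb_ext_stage_map : emb ext_stage_map.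
Proof.
  split; [| split; [| split]]; unfold ext_stage_map.
  - intros [x px] [y py]; simpl; intros E. apply sig_eq; simpl. eapply ext_pt_inj; eauto.
  - intros [x px] [y py]; apply ext_stage_rel.
  - intros [x px] [y py]; apply ext_stage_rel.
  - intros k [x px]; apply ext_pt_op.
Qed.

Lemma extends_ext_stage : extends F ext_stage.
Proof.
  destruct ei as (_ & iR & iS & _).
  split; [simpl; unfold ext_size; lia | split].
  - intros x y Hx Hy.
    assert (Hx' : x < ext_size) by (unfold ext_size; lia).
    assert (Hy' : y < ext_size) by (unfold ext_size; lia).
    simpl. rewrite !(ext_stage_rel _ x y Hx' Hy'), (ext_pt_old x Hx), (ext_pt_old y Hy).
    rewrite <- (iR (exist _ x Hx) (exist _ y Hy)), <- (iS (exist _ x Hx) (exist _ y Hy)).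
    simpl; tauto.
  - intros k x Hx. simpl. unfold ext_op. destruct (Nat.ltb_spec x n); auto; lia.
Qed.

Lemma nat_emb_ext_index : nat_emb B ext_stage ext_index.
Proof.
  destruct ej as (jinj & jR & jS & jop).
  assert (E : forall b (q : b < m), ext_pt (ext_index b) (ext_index_lt b q) = j (exist _ b q))
    by (intros; apply ext_pt_index).
  split; [| split; [| split; [| split]]].
  - exact ext_index_lt.
  - intros b b' Hb Hb' Eb.
    assert (ext_pt (ext_index b) (ext_index_lt b Hb) = ext_pt (ext_index b') (ext_index_lt b' Hb'))
      by (generalize (ext_index_lt b Hb); rewrite Eb; intros; apply ext_pt_irr).
    rewrite !E in H. exact (f_equal (@proj1_sig _ _) (jinj _ _ H)).
  - intros b b' Hb Hb'. simpl.
    rewrite (ext_stage_rel _ _ _ (ext_index_lt b Hb) (ext_index_lt b' Hb')), !E.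
    exact (jR (exist _ b Hb) (exist _ b' Hb')).
  - intros b b' Hb Hb'. simpl.
    rewrite (ext_stage_rel _ _ _ (ext_index_lt b Hb) (ext_index_lt b' Hb')), !E.
    exact (jS (exist _ b Hb) (exist _ b' Hb')).
  - intros k b Hb. simpl.
    assert (q : nop B k b < m) by (apply nop_lt; auto).
    apply (ext_pt_inj _ _ (ext_index_lt _ q) (ext_op_lt k _ (ext_index_lt b Hb))).
    rewrite ext_pt_op, !E, <- jop. f_equal; apply sig_eq; auto.
Qed.

Lemma ext_index_shared x (px : x < n) b (q : b < m) :
  i (exist _ x px) = j (exist _ b q) -> ext_index b = x.
Proof.
  destruct ei as (iinj & _). intros E.
  unfold ext_index. destruct excluded_middle_informative as [h | h].
  - destruct (some_or_spec 0 _ h) as (pa & q' & E').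
    assert (E2 : i (exist (fun a => a < n) _ pa) = i (exist _ x px))
      by (rewrite E', E; f_equal; apply sig_eq; auto).
    exact (f_equal (@proj1_sig _ _) (iinj _ _ E2)).
  - exfalso. apply h. exists x, px, q. exact E.
Qed.

End StageAmalgam.

(** * Back and forth *)

Section BackAndForth.
Context {I : Type} (M : Str I).

Lemma gen_incl (l l' : list M) z : incl l l' -> gen M l z -> gen M l' z.
Proof. intros H G; induction G; [apply gen_base | apply gen_op]; auto. Qed.

Lemma gen_nil (x : M) : ~ gen M [] x.
Proof. induction 1; simpl in *; auto. Qed.

Definition gen_substr (l : list M) : substr M :=
  {| sp := gen M l; sp_closed := fun i x h => gen_op i h |}.

Lemma emb_image_fg (N : Str I) (h : N -> M) : emb h -> finite_type N ->
  exists X : substr M, fin_gen X /\ exists h' : N -> induced X, iso h'.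
Proof.
  intros (hinj & hR & hS & hop) [lN HlN].
  assert (cl : forall i x, (exists n, h n = x) -> exists n, h n = op M i x)
    by (intros i x [n <-]; exists (op N i n); apply hop).
  set (X := {| sp := fun x => exists n, h n = x; sp_closed := cl |}).
  exists X. split.
  - exists (map h lN). intros x; simpl; split.
    + intros [n <-]. apply gen_base, in_map; auto.
    + induction 1 as [x Hx | i x G IH]; [| apply cl; auto].
      apply in_map_iff in Hx. destruct Hx as [n [<- _]]. eauto.
  - exists (fun n => exist _ (h n) (ex_intro _ n eq_refl) : induced X).
    split; [split; [| split; [| split]] |].
    + intros n n' E. apply hinj. exact (f_equal (@proj1_sig _ _) E).
    + intros n n'. apply hR.
    + intros n n'. apply hS.
    + intros i n. apply sig_eq. apply hop.
    + intros [x [n <-]]. exists n. apply sig_eq; auto.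
Qed.

Definition partial_iso (l1 l2 : list M) (phi psi : M -> M) : Prop :=
  (forall x, gen M l1 x -> gen M l2 (phi x) /\ psi (phi x) = x) /\
  (forall y, gen M l2 y -> gen M l1 (psi y) /\ phi (psi y) = y) /\
  (forall x y, gen M l1 x -> gen M l1 y ->
     (rR M x y <-> rR M (phi x) (phi y)) /\ (rS M x y <-> rS M (phi x) (phi y))) /\
  (forall i x, gen M l1 x -> phi (op M i x) = op M i (phi x)).

Lemma partial_iso_sym l1 l2 phi psi : partial_iso l1 l2 phi psi -> partial_iso l2 l1 psi phi.
Proof.
  intros (i1 & i2 & i3 & i4). split; [auto | split; [auto | split]].
  - intros x y gx gy. destruct (i2 x gx) as [a1 a2], (i2 y gy) as [b1 b2].
    destruct (i3 _ _ a1 b1) as [c1 c2]. rewrite a2, b2 in c1, c2. tauto.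
  - intros i y gy. destruct (i2 y gy) as [a1 a2].
    assert (g1 : gen M l1 (psi (op M i y))) by (apply i2, gen_op; auto).
    assert (g2 : gen M l1 (op M i (psi y))) by (apply gen_op; auto).
    rewrite <- (proj2 (i1 _ g1)), <- (proj2 (i1 _ g2)). f_equal.
    rewrite (proj2 (i2 _ (gen_op i gy))), i4, a2; auto.
Qed.

Lemma partial_iso_of_emb (l : list M) (phi : M -> M) :
  (forall x y, gen M l x -> gen M l y -> phi x = phi y -> x = y) ->
  (forall x y, gen M l x -> gen M l y ->
     (rR M x y <-> rR M (phi x) (phi y)) /\ (rS M x y <-> rS M (phi x) (phi y))) ->
  (forall i x, gen M l x -> phi (op M i x) = op M i (phi x)) ->
  exists psi, partial_iso l (map phi l) phi psi.
Proof.
  intros phinj phrel phop.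
  assert (img1 : forall z, gen M l z -> gen M (map phi l) (phi z)).
  { induction 1 as [z Hz | i z G IH]; [apply gen_base, in_map; auto |].
    rewrite phop; auto. apply gen_op; auto. }
  assert (img2 : forall w, gen M (map phi l) w -> exists z, gen M l z /\ phi z = w).
  { induction 1 as [w Hw | i w G [z [gz <-]]].
    - apply in_map_iff in Hw. destruct Hw as [z [<- Hz]].
      exists z. split; [apply gen_base |]; auto.
    - exists (op M i z). split; [apply gen_op; auto | apply phop; auto]. }
  set (psi w := some_or w (fun z => gen M l z /\ phi z = w)).
  assert (psi_spec : forall w, gen M (map phi l) w -> gen M l (psi w) /\ phi (psi w) = w)
    by (intros w G; apply some_or_spec, img2, G).
  exists psi. split; [| split; [| split]]; auto.
  intros z gz. split; auto. destruct (psi_spec (phi z) (img1 z gz)). apply phinj; auto.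
Qed.

Lemma partial_iso_inverse_ext l1 l2 phi psi l1' l2' phi' psi' :
  partial_iso l1 l2 phi psi -> partial_iso l1' l2' phi' psi' ->
  (forall z, gen M l1 z -> gen M l1' z /\ phi' z = phi z) ->
  (forall w, gen M l2 w -> gen M l2' w /\ psi' w = psi w).
Proof.
  intros (i1 & i2 & _) (i1' & i2' & _) H w gw.
  destruct (i2 w gw) as [gz Ez]. destruct (H _ gz) as [gz' Ez'].
  rewrite <- Ez, <- Ez'. destruct (i1' _ gz') as [p q]. split; auto. rewrite q, Ez', Ez. auto.
Qed.

Lemma partial_iso_of_iso (X Y : substr M) lX lY :
  (forall x, sp X x <-> gen M lX x) -> (forall y, sp Y y <-> gen M lY y) ->
  forall h : induced X -> induced Y, iso h ->
  exists phi psi, partial_iso lX lY phi psi /\ forall x, phi (proj1_sig x) = proj1_sig (h x).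
Proof.
  intros HX HY h isoh.
  destruct (iso_inv h isoh) as [h' [(_ & h'R & h'S & h'op) [hh' h'h]]].
  destruct isoh as ((hinj & hR & hS & hop) & _).
  set (phi z := match excluded_middle_informative (sp X z) with
                | left p => proj1_sig (h (exist _ z p)) | right _ => z end).
  set (psi w := match excluded_middle_informative (sp Y w) with
                | left p => proj1_sig (h' (exist _ w p)) | right _ => w end).
  assert (phi_h : forall z (p : sp X z), phi z = proj1_sig (h (exist _ z p))).
  { intros z p. unfold phi. destruct excluded_middle_informative; [| contradiction].
    do 2 f_equal. apply sig_eq; auto. }
  assert (psi_h' : forall w (p : sp Y w), psi w = proj1_sig (h' (exist _ w p))).
  { intros w p. unfold psi. destruct excluded_middle_informative; [| contradiction].
    do 2 f_equal. apply sig_eq; auto. }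
  exists phi, psi. split; [split; [| split; [| split]] |].
  - intros x gx. apply HX in gx. rewrite (phi_h x gx). split; [apply HY, proj2_sig |].
    rewrite (psi_h' _ (proj2_sig (h (exist _ x gx)))).
    replace (exist _ (proj1_sig (h (exist _ x gx))) _) with (h (exist _ x gx))
      by (apply sig_eq; auto).
    rewrite h'h. auto.
  - intros y gy. apply HY in gy. rewrite (psi_h' y gy). split; [apply HX, proj2_sig |].
    rewrite (phi_h _ (proj2_sig (h' (exist _ y gy)))).
    replace (exist _ (proj1_sig (h' (exist _ y gy))) _) with (h' (exist _ y gy))
      by (apply sig_eq; auto).
    rewrite hh'. auto.
  - intros x y gx gy. apply HX in gx, gy. rewrite (phi_h x gx), (phi_h y gy).
    exact (conj (hR (exist _ x gx) (exist _ y gy)) (hS (exist _ x gx) (exist _ y gy))).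
  - intros i x gx. apply HX in gx. rewrite (phi_h x gx), (phi_h _ (sp_closed X i x gx)).
    exact (f_equal (@proj1_sig _ _) (hop i (exist _ x gx))).
  - intros [x px]. apply phi_h.
Qed.

Record bf_state := { sl1 : list M; sl2 : list M; sphi : M -> M; spsi : M -> M }.

Definition bf_good (s : bf_state) : Prop := partial_iso (sl1 s) (sl2 s) (sphi s) (spsi s).

Definition bf_extends (s s' : bf_state) : Prop :=
  (forall z, gen M (sl1 s) z -> gen M (sl1 s') z /\ sphi s' z = sphi s z) /\
  (forall w, gen M (sl2 s) w -> gen M (sl2 s') w /\ spsi s' w = spsi s w).

Definition bf_swap (s : bf_state) : bf_state :=
  {| sl1 := sl2 s; sl2 := sl1 s; sphi := spsi s; spsi := sphi s |}.

Lemma bf_extends_refl s : bf_extends s s.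
Proof. split; auto. Qed.

Lemma bf_extends_trans s1 s2 s3 : bf_extends s1 s2 -> bf_extends s2 s3 -> bf_extends s1 s3.
Proof.
  intros (a1 & b1) (a2 & b2). split.
  - intros z gz. destruct (a1 z gz) as [p q], (a2 z p) as [p' q']. split; auto. congruence.
  - intros z gz. destruct (b1 z gz) as [p q], (b2 z p) as [p' q']. split; auto. congruence.
Qed.

Variable code : M -> nat.
Hypothesis code_inj : forall x y, code x = code y -> x = y.

Section Union.
Variable st : nat -> bf_state.
Hypothesis st_good : forall k, bf_good (st k).
Hypothesis st_mono : forall k k', k <= k' -> bf_extends (st k) (st k').
Hypothesis st_dom : forall x, gen M (sl1 (st (S (code x)))) x.
Hypothesis st_ran : forall x, gen M (sl2 (st (S (code x)))) x.

Definition union_map (x : M) : M := sphi (st (S (code x))) x.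

Lemma union_map_stage k x : gen M (sl1 (st k)) x -> union_map x = sphi (st k) x.
Proof.
  intros gx. unfold union_map. set (k1 := S (code x)).
  destruct (st_mono k (max k k1) ltac:(lia)) as [a _], (st_mono k1 (max k k1) ltac:(lia)) as [b _].
  destruct (a x gx) as [_ E1], (b x (st_dom x)) as [_ E2]. congruence.
Qed.

Lemma union_common_stage x y : exists k, gen M (sl1 (st k)) x /\ gen M (sl1 (st k)) y.
Proof.
  exists (max (S (code x)) (S (code y))).
  split; [apply (st_mono (S (code x))) | apply (st_mono (S (code y)))]; auto; lia.
Qed.

Lemma iso_union_map : iso union_map.
Proof.
  split; [split; [| split; [| split]] |].
  - intros x y E. destruct (union_common_stage x y) as (k & gx & gy).
    rewrite (union_map_stage k x gx), (union_map_stage k y gy) in E.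
    destruct (st_good k) as (i1 & _).
    rewrite <- (proj2 (i1 x gx)), <- (proj2 (i1 y gy)), E. auto.
  - intros x y. destruct (union_common_stage x y) as (k & gx & gy).
    rewrite (union_map_stage k x gx), (union_map_stage k y gy). apply (st_good k); auto.
  - intros x y. destruct (union_common_stage x y) as (k & gx & gy).
    rewrite (union_map_stage k x gx), (union_map_stage k y gy). apply (st_good k); auto.
  - intros i x. set (k := S (code x)).
    rewrite (union_map_stage k x (st_dom x)), (union_map_stage k _ (gen_op i (st_dom x))).
    apply (st_good k), st_dom.
  - intros y. set (k := S (code y)). destruct (st_good k) as (_ & i2 & _).
    destruct (i2 y (st_ran y)) as [a b].
    exists (spsi (st k) y). rewrite (union_map_stage k _ a). auto.
Qed.

End Union.

Hypothesis forth : forall l1 l2 phi psi x, partial_iso l1 l2 phi psi ->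
  exists l2' phi' psi', partial_iso (x :: l1) l2' phi' psi' /\
    forall z, gen M l1 z -> phi' z = phi z.

Lemma forth_code s k : bf_good s ->
  exists s', bf_good s' /\ bf_extends s s' /\ forall x, code x = k -> gen M (sl1 s') x.
Proof.
  intros H. destruct (classic (exists x, code x = k)) as [[x Hx] | N].
  - destruct (forth _ _ _ _ x H) as (l2' & phi' & psi' & Hi & He).
    exists {| sl1 := x :: sl1 s; sl2 := l2'; sphi := phi'; spsi := psi' |}.
    assert (A : forall z, gen M (sl1 s) z -> gen M (x :: sl1 s) z /\ phi' z = sphi s z)
      by (intros z gz; split; auto; eapply gen_incl; [| eauto]; intros a; simpl; auto).
    split; auto. split; [split; auto; exact (partial_iso_inverse_ext _ _ _ _ _ _ _ _ H Hi A) |].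
    intros y Hy. simpl. rewrite (code_inj y x) by congruence. apply gen_base; simpl; auto.
  - exists s. split; auto. split; [apply bf_extends_refl | intros x Hx; exfalso; eauto].
Qed.

Lemma back_and_forth_code s k : bf_good s ->
  exists s', bf_good s' /\ bf_extends s s' /\
    (forall x, code x = k -> gen M (sl1 s') x) /\ (forall x, code x = k -> gen M (sl2 s') x).
Proof.
  intros H. destruct (forth_code s k H) as (s1 & H1 & E1 & F1).
  destruct (forth_code (bf_swap s1) k (partial_iso_sym _ _ _ _ H1)) as (s2 & H2 & E2 & F2).
  exists (bf_swap s2). split; [apply partial_iso_sym, H2 | split; [| split]].
  - eapply bf_extends_trans; [exact E1 |]. destruct E2 as [a b]. split; auto.
  - intros x Hx. destruct E2 as [_ b]. apply b, F1, Hx.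
  - exact F2.
Qed.

Theorem partial_iso_extends l1 l2 phi psi : partial_iso l1 l2 phi psi ->
  exists s : M -> M, iso s /\ forall x, gen M l1 x -> s x = phi x.
Proof.
  intros H0.
  assert (next : forall (s : {s | bf_good s}) (k : nat), exists s' : {s | bf_good s},
             bf_extends (proj1_sig s) (proj1_sig s') /\
             (forall x, code x = k -> gen M (sl1 (proj1_sig s')) x) /\
             (forall x, code x = k -> gen M (sl2 (proj1_sig s')) x)).
  { intros [s Hs] k. destruct (back_and_forth_code s k Hs) as (s' & Hs' & E).
    exists (exist _ s' Hs'); exact E. }
  destruct (choice _ (fun sk : {s | bf_good s} * nat => next (fst sk) (snd sk))) as [nx Hnx].
  set (s0 := exist bf_good {| sl1 := l1; sl2 := l2; sphi := phi; spsi := psi |} H0).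
  set (st := fix st k := match k with 0 => s0 | S k => nx (st k, k) end).
  assert (stS : forall k, st (S k) = nx (st k, k)) by reflexivity.
  assert (mono : forall k k', k <= k' -> bf_extends (proj1_sig (st k)) (proj1_sig (st k'))).
  { induction 1; [apply bf_extends_refl |]. eapply bf_extends_trans; [eauto |].
    rewrite stS. apply (Hnx (st m, m)). }
  assert (dom : forall x, gen M (sl1 (proj1_sig (st (S (code x))))) x)
    by (intros x; rewrite stS; apply (Hnx (st (code x), code x)); auto).
  assert (ran : forall x, gen M (sl2 (proj1_sig (st (S (code x))))) x)
    by (intros x; rewrite stS; apply (Hnx (st (code x), code x)); auto).
  exists (union_map (fun k => proj1_sig (st k))). split.
  - apply iso_union_map; auto. intros k; apply proj2_sig.
  - intros x gx. exact (union_map_stage _ mono dom 0 x gx).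
Qed.

Theorem ultrahomogeneous_of_forth : ultrahomogeneous M.
Proof.
  intros X Y [lX HX] [lY HY] h isoh.
  destruct (partial_iso_of_iso X Y lX lY HX HY h isoh) as (phi & psi & H & Hh).
  destruct (partial_iso_extends _ _ _ _ H) as (s & isos & Hs).
  exists s. split; auto. intros [x px]. rewrite <- Hh. apply Hs, HX, px.
Qed.

End BackAndForth.

(** * Fraïssé limits *)

Section FraisseLimit.
Variable I : Type.
Variable lI : list I.
Hypothesis lI_full : forall i, In i lI.
Variable K : Str I -> Prop.
Hypothesis K_emb : forall (D E : Str I) (h : E -> D), K D -> emb h -> K E.
Hypothesis K_AP : AP K.
Hypothesis K_empty : forall E : Str I, (E -> False) -> K E.

Local Notation dec := (decode I lI lI_full).

Inductive genN (F : NatStr I) (l : list nat) : nat -> Prop :=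
| genN_base x : In x l -> genN F l x
| genN_op k x : genN F l x -> genN F l (nop F k x).

Lemma genN_lt F l x : (forall y, In y l -> y < nsize F) -> genN F l x -> x < nsize F.
Proof. intros H G; induction G; auto using nop_lt. Qed.

Definition emb_on (F : NatStr I) (l : list nat) (B : NatStr I) (e : nat -> nat) : Prop :=
  (forall x, genN F l x -> e x < nsize B) /\
  (forall x y, genN F l x -> genN F l y -> e x = e y -> x = y) /\
  (forall x y, genN F l x -> genN F l y -> (nR F x y <-> nR B (e x) (e y))) /\
  (forall x y, genN F l x -> genN F l y -> (nS F x y <-> nS B (e x) (e y))) /\
  (forall k x, genN F l x -> e (nop F k x) = nop B k (e x)).

(* The structure coded by [c], the generators [l] of a substructure of the current stage, and
   the table of an embedding of that substructure into [c]. *)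
Definition task : Type := (str_code * list nat * list (nat * nat))%type.

Definition valid_task (F : NatStr I) (t : task) : Prop :=
  let '(c, l, tbl) := t in
  K (to_str F) /\ K (to_str (dec c)) /\ (forall x, In x l -> x < nsize F) /\
  emb_on F l (dec c) (lookup tbl).

Definition solves (F : NatStr I) (t : task) (F' : NatStr I) : Prop :=
  let '(c, l, tbl) := t in
  extends F F' /\ K (to_str F') /\
  exists h, nat_emb (dec c) F' h /\ forall x, genN F l x -> h (lookup tbl x) = x.

Lemma valid_task_solvable F t : valid_task F t -> exists F', solves F t F'.
Proof.
  destruct t as [[c l] tbl]. intros (KF & KB & Hl & (e1 & e2 & e3 & e4 & e5)).
  set (B := dec c) in *. set (e := lookup tbl) in *.
  set (C := mkStr {x : nat | genN F l x}
          (fun x y => nR F (proj1_sig x) (proj1_sig y))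
          (fun x y => nS F (proj1_sig x) (proj1_sig y))
          (fun k x => exist _ (nop F k (proj1_sig x)) (genN_op F l k _ (proj2_sig x))) : Str I).
  set (f := fun x : C => exist (fun y => y < nsize F) (proj1_sig x) (genN_lt F l _ Hl (proj2_sig x))
            : to_str F).
  set (g := fun x : C => exist (fun y => y < nsize B) (e (proj1_sig x)) (e1 _ (proj2_sig x))
            : to_str B).
  assert (ef : emb f).
  { split; [| split; [| split]]; try (intros [x px] [y py]; simpl; tauto).
    - intros [x px] [y py] E. apply sig_eq. exact (f_equal (@proj1_sig _ _) E).
    - intros k [x px]. apply sig_eq; reflexivity. }
  assert (eg : emb g).
  { split; [| split; [| split]]; try (intros [x px] [y py]; simpl; auto).
    - intros E. apply sig_eq, e2; auto. exact (f_equal (@proj1_sig _ _) E).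
    - intros k [x px]. apply sig_eq; simpl; auto. }
  destruct (K_AP (to_str F) (to_str B) C f g KF KB (K_emb _ _ f KF ef) ef eg)
    as (D & i & j & KD & ei & ej & comm).
  exists (ext_stage I F B D i j). split; [| split].
  - exact (extends_ext_stage I F B D i j ei).
  - exact (K_emb _ _ _ KD (emb_ext_stage_map I F B D i j ei ej)).
  - exists (ext_index I F B D i j). split; [exact (nat_emb_ext_index I F B D i j ei ej) |].
    intros x gx. apply (ext_index_shared I F B D i j ei x (genN_lt F l _ Hl gx) _ (e1 _ gx)).
    exact (comm (exist _ x gx)).
Qed.

Definition step (F : NatStr I) (t : task) : NatStr I := some_or F (solves F t).

Lemma step_solves F t : valid_task F t -> solves F t (step F t).
Proof. intros V. unfold step. apply some_or_spec, valid_task_solvable, V. Qed.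

Lemma step_extends F t : K (to_str F) -> extends F (step F t) /\ K (to_str (step F t)).
Proof.
  intros KF. destruct t as [[c l] tbl]. unfold step.
  destruct (some_or_cases F (solves F (c, l, tbl))) as [(H1 & H2 & _) | ->]; auto.
  split; [apply extends_refl | exact KF].
Qed.

Lemma enumerable_task : enumerable task.
Proof.
  repeat apply enumerable_prod;
    auto using enumerable_str_code, enumerable_list, enumerable_prod, enumerable_nat.
Qed.

Definition task_at (k : nat) : task :=
  proj1_sig (constructive_indefinite_description _ enumerable_task) (fst (of_nat k)).

Lemma task_at_often t k0 : exists k, k0 <= k /\ task_at k = t.
Proof.
  unfold task_at. destruct constructive_indefinite_description as [e He]; simpl.
  destruct (He t) as [n Hn]. exists (to_nat (n, k0)). split.
  - pose proof (to_nat_non_decreasing n k0). lia.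
  - rewrite cancel_of_to; exact Hn.
Qed.

Definition empty_stage : NatStr I :=
  {| nsize := 0; nR := fun _ _ => False; nS := fun _ _ => False; nop := fun _ x => x;
     nop_lt := fun _ _ h => h |}.

Fixpoint stage (k : nat) : NatStr I :=
  match k with 0 => empty_stage | S k => step (stage k) (task_at k) end.

Lemma stage_K k : K (to_str (stage k)).
Proof.
  induction k as [| k IH].
  - apply K_empty. intros [x px]. simpl in px. lia.
  - exact (proj2 (step_extends (stage k) (task_at k) IH)).
Qed.

Lemma stage_extends k k' : k <= k' -> extends (stage k) (stage k').
Proof.
  induction 1; [apply extends_refl |].
  eapply extends_trans; eauto. exact (proj1 (step_extends (stage m) (task_at m) (stage_K m))).
Qed.

Lemma stage_size_mono k k' x : k <= k' -> x < nsize (stage k) -> x < nsize (stage k').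
Proof. intros H1 H2. destruct (stage_extends k k' H1) as (a & _). lia. Qed.

Lemma stage_rel_stable k k' x y :
  x < nsize (stage k) -> y < nsize (stage k) -> x < nsize (stage k') -> y < nsize (stage k') ->
  (nR (stage k) x y <-> nR (stage k') x y) /\ (nS (stage k) x y <-> nS (stage k') x y).
Proof.
  intros. destruct (le_ge_dec k k') as [h | h].
  - destruct (stage_extends k k' h) as (_ & b & _). apply b; auto.
  - destruct (stage_extends k' k h) as (_ & b & _). destruct (b x y); auto. tauto.
Qed.

Lemma stage_op_stable k k' i x : x < nsize (stage k) -> x < nsize (stage k') ->
  nop (stage k) i x = nop (stage k') i x.
Proof.
  intros. destruct (le_ge_dec k k') as [h | h].
  - destruct (stage_extends k k' h) as (_ & _ & c). rewrite c; auto.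
  - destruct (stage_extends k' k h) as (_ & _ & c). rewrite c; auto.
Qed.

Definition limit_pt : Type := {x : nat | exists k, x < nsize (stage k)}.

Definition limit_R (x y : limit_pt) : Prop :=
  exists k, proj1_sig x < nsize (stage k) /\ proj1_sig y < nsize (stage k) /\
    nR (stage k) (proj1_sig x) (proj1_sig y).

Definition limit_S (x y : limit_pt) : Prop :=
  exists k, proj1_sig x < nsize (stage k) /\ proj1_sig y < nsize (stage k) /\
    nS (stage k) (proj1_sig x) (proj1_sig y).

Definition limit_op (i : I) (x : limit_pt) : limit_pt :=
  let (k, hk) := constructive_indefinite_description _ (proj2_sig x) in
  exist _ (nop (stage k) i (proj1_sig x)) (ex_intro _ k (nop_lt (stage k) i _ hk)).

Definition limit : Str I := mkStr limit_pt limit_R limit_S limit_op.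

Lemma limit_R_iff k (x y : limit) :
  proj1_sig x < nsize (stage k) -> proj1_sig y < nsize (stage k) ->
  (rR limit x y <-> nR (stage k) (proj1_sig x) (proj1_sig y)).
Proof.
  intros hx hy. split; [intros (k' & h1 & h2 & h3) | intros h; exists k; auto].
  apply (stage_rel_stable k' k); auto.
Qed.

Lemma limit_S_iff k (x y : limit) :
  proj1_sig x < nsize (stage k) -> proj1_sig y < nsize (stage k) ->
  (rS limit x y <-> nS (stage k) (proj1_sig x) (proj1_sig y)).
Proof.
  intros hx hy. split; [intros (k' & h1 & h2 & h3) | intros h; exists k; auto].
  apply (stage_rel_stable k' k); auto.
Qed.

Lemma limit_op_val k i (x : limit) : proj1_sig x < nsize (stage k) ->
  proj1_sig (op limit i x) = nop (stage k) i (proj1_sig x).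
Proof.
  intros h. simpl; unfold limit_op.
  destruct constructive_indefinite_description as [k' h']; simpl. apply stage_op_stable; auto.
Qed.

Definition stage_in_limit (k : nat) (x : to_str (stage k)) : limit :=
  exist _ (proj1_sig x) (ex_intro _ k (proj2_sig x)).

Lemma emb_stage_in_limit k : emb (stage_in_limit k).
Proof.
  split; [| split; [| split]].
  - intros [x px] [y py] E. apply sig_eq. exact (f_equal (@proj1_sig _ _) E).
  - intros [x px] [y py]. symmetry; apply (limit_R_iff k); auto.
  - intros [x px] [y py]. symmetry; apply (limit_S_iff k); auto.
  - intros i [x px]. apply sig_eq. symmetry.
    apply (limit_op_val k i (stage_in_limit k (exist _ x px))); auto.
Qed.

Lemma limit_list_in_stage (l : list limit) :
  exists k, forall x, In x l -> proj1_sig x < nsize (stage k).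
Proof.
  induction l as [| a r [k Hk]]; [exists 0; simpl; tauto |].
  destruct (proj2_sig a) as [k' Hk']. exists (max k k'). intros x [<- | Hx].
  - eapply stage_size_mono; [| exact Hk']. lia.
  - eapply stage_size_mono; [| apply Hk; auto]. lia.
Qed.

Section Generated.
Variables (k : nat) (lx : list limit).
Hypothesis lx_in_stage : forall x, In x lx -> proj1_sig x < nsize (stage k).

Lemma gen_in_stage (x : limit) : gen limit lx x ->
  genN (stage k) (map (@proj1_sig _ _) lx) (proj1_sig x) /\ proj1_sig x < nsize (stage k).
Proof.
  induction 1 as [x Hx | i x G [IH1 IH2]].
  - split; auto. apply genN_base, in_map; auto.
  - rewrite (limit_op_val k); auto. split; [apply genN_op; auto | apply nop_lt; auto].
Qed.

Lemma genN_in_limit y : genN (stage k) (map (@proj1_sig _ _) lx) y ->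
  exists x : limit, proj1_sig x = y /\ gen limit lx x.
Proof.
  induction 1 as [y Hy | i y G [x [<- Gx]]].
  - apply in_map_iff in Hy. destruct Hy as [x [<- Hx]]. exists x; split; auto. apply gen_base; auto.
  - exists (op limit i x). split; [apply limit_op_val, gen_in_stage; auto | apply gen_op; auto].
Qed.

End Generated.

Section FinitelyGenerated.
Variables (X : substr limit) (lx : list limit).
Hypothesis X_gen : forall x, sp X x <-> gen limit lx x.

Lemma induced_in_stage k : (forall x, In x lx -> proj1_sig x < nsize (stage k)) ->
  forall xx : induced X, proj1_sig (proj1_sig xx) < nsize (stage k) /\
    genN (stage k) (map (@proj1_sig _ _) lx) (proj1_sig (proj1_sig xx)).
Proof.
  intros Hk [x px]. simpl. apply X_gen in px. destruct (gen_in_stage k lx Hk x px); auto.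
Qed.

Lemma emb_on_of_emb k (B : NatStr I) (e : induced X -> to_str B) (E : nat -> nat) :
  (forall x, In x lx -> proj1_sig x < nsize (stage k)) -> emb e ->
  (forall xx, E (proj1_sig (proj1_sig xx)) = proj1_sig (e xx)) ->
  emb_on (stage k) (map (@proj1_sig _ _) lx) B E.
Proof.
  intros Hk (einj & eR & eS & eop) HE.
  assert (G : forall y, genN (stage k) (map (@proj1_sig _ _) lx) y ->
              exists xx : induced X, proj1_sig (proj1_sig xx) = y).
  { intros y gy. destruct (genN_in_limit k lx Hk y gy) as [x [<- gx]].
    apply X_gen in gx. exists (exist _ x gx); auto. }
  split; [| split; [| split; [| split]]].
  - intros y gy. destruct (G y gy) as [xx <-]. rewrite HE. apply proj2_sig.
  - intros y y' gy gy'. destruct (G y gy) as [xx <-], (G y' gy') as [xx' <-].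
    rewrite !HE. intros H. apply sig_eq in H. rewrite (einj _ _ H); auto.
  - intros y y' gy gy'. destruct (G y gy) as [xx <-], (G y' gy') as [xx' <-].
    rewrite !HE, <- (limit_R_iff k) by apply (induced_in_stage k Hk).
    exact (eR xx xx').
  - intros y y' gy gy'. destruct (G y gy) as [xx <-], (G y' gy') as [xx' <-].
    rewrite !HE, <- (limit_S_iff k) by apply (induced_in_stage k Hk).
    exact (eS xx xx').
  - intros i y gy. destruct (G y gy) as [xx <-].
    rewrite <- (limit_op_val k) by apply (induced_in_stage k Hk xx).
    change (proj1_sig (op limit i (proj1_sig xx)))
      with (proj1_sig (proj1_sig (op (induced X) i xx))).
    rewrite !HE, eop. reflexivity.
Qed.

(* The embedding of [X] into [B] is written down as a task; once the enumeration reaches that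
   task, the next stage contains a copy of [B] over [X]. *)
Theorem limit_extension (B : Str I) : finite_type B -> K B ->
  forall e : induced X -> B, emb e ->
  exists h : B -> limit, emb h /\ forall x, h (e x) = proj1_sig x.
Proof.
  intros finB KB e ee.
  destruct (limit_list_in_stage lx) as [k0 Hk0].
  destruct (finite_str_coded I lI lI_full B finB) as [c [phi isophi]].
  destruct (iso_inv phi isophi) as [psi [epsi [phipsi _]]].
  set (e' xx := psi (e xx)).
  destruct (extend_along_inj (fun xx : induced X => proj1_sig (proj1_sig xx))
              (fun xx => proj1_sig (e' xx))) as [E HE].
  { intros xx xx' H. apply sig_eq, sig_eq, H. }
  set (tbl := map (fun y => (y, E y)) (seq 0 (nsize (stage k0)))).
  assert (Htbl : forall xx : induced X, lookup tbl (proj1_sig (proj1_sig xx)) = proj1_sig (e' xx)).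
  { intros xx. unfold tbl. rewrite lookup_graph, HE; auto.
    destruct (induced_in_stage k0 Hk0 xx); lia. }
  destruct (task_at_often (c, map (@proj1_sig _ _) lx, tbl) k0) as [k [Hk Ht]].
  assert (Hkl : forall x, In x lx -> proj1_sig x < nsize (stage k))
    by (intros; eapply stage_size_mono; eauto).
  assert (V : valid_task (stage k) (c, map (@proj1_sig _ _) lx, tbl)).
  { split; [apply stage_K | split; [exact (K_emb _ _ phi KB (proj1 isophi)) | split]].
    - intros y Hy. apply in_map_iff in Hy. destruct Hy as [x [<- Hx]]. auto.
    - apply (emb_on_of_emb k _ e'); auto. unfold e'; apply emb_comp; auto. }
  assert (next : stage (S k) = step (stage k) (c, map (@proj1_sig _ _) lx, tbl))
    by (simpl; rewrite Ht; reflexivity).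
  apply step_solves in V. rewrite <- next in V. destruct V as (_ & _ & bm & Ebm & Hbm).
  exists (fun b => stage_in_limit (S k) (lift_nat_map _ _ bm (proj1 Ebm) (psi b))). split.
  - apply (emb_comp psi (fun z => stage_in_limit (S k) (lift_nat_map _ _ bm (proj1 Ebm) z))); auto.
    apply emb_comp; [apply emb_lift_nat_map | apply emb_stage_in_limit].
  - intros xx. apply sig_eq. simpl. change (proj1_sig (psi (e xx))) with (proj1_sig (e' xx)).
    rewrite <- Htbl. apply Hbm, (induced_in_stage k Hkl xx).
Qed.

Lemma fg_induced_finite : finite_type (induced X).
Proof.
  destruct (limit_list_in_stage lx) as [k0 Hk0].
  apply (finite_inj (fun xx : induced X => proj1_sig (proj1_sig xx)) (seq 0 (nsize (stage k0)))).
  - intros xx. apply in_seq. destruct (induced_in_stage k0 Hk0 xx). lia.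
  - intros xx xx' H. apply sig_eq, sig_eq, H.
Qed.

Lemma fg_induced_K : K (induced X).
Proof.
  destruct (limit_list_in_stage lx) as [k0 Hk0].
  set (h := (fun xx => exist _ (proj1_sig (proj1_sig xx)) (proj1 (induced_in_stage k0 Hk0 xx)))
             : induced X -> to_str (stage k0)).
  apply (K_emb _ _ h (stage_K k0)).
  split; [| split; [| split]].
  - intros xx xx' H. apply sig_eq, sig_eq. exact (f_equal (@proj1_sig _ _) H).
  - intros xx xx'. apply limit_R_iff; apply (induced_in_stage k0 Hk0).
  - intros xx xx'. apply limit_S_iff; apply (induced_in_stage k0 Hk0).
  - intros i xx. apply sig_eq. apply (limit_op_val k0), (induced_in_stage k0 Hk0).
Qed.

End FinitelyGenerated.

Lemma limit_forth l1 l2 phi psi x : partial_iso limit l1 l2 phi psi ->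
  exists l2' phi' psi', partial_iso limit (x :: l1) l2' phi' psi' /\
    forall z, gen limit l1 z -> phi' z = phi z.
Proof.
  intros H. pose proof (partial_iso_sym _ _ _ _ _ H) as (_ & _ & j3 & j4).
  destruct H as (i1 & i2 & _).
  set (Xp := gen_substr limit (x :: l1)). set (Y := gen_substr limit l2).
  assert (sub : forall z, gen limit l1 z -> gen limit (x :: l1) z)
    by (intros z; apply gen_incl; intros a; simpl; auto).
  set (e := (fun yy => exist _ (psi (proj1_sig yy)) (sub _ (proj1 (i2 _ (proj2_sig yy)))))
            : induced Y -> induced Xp).
  assert (ee : emb e).
  { split; [| split; [| split]].
    - intros [y py] [y' py'] E. apply (f_equal (@proj1_sig _ _)) in E. simpl in E.
      apply sig_eq. simpl. rewrite <- (proj2 (i2 y py)), <- (proj2 (i2 y' py')), E. auto.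
    - intros [y py] [y' py']. apply j3; auto.
    - intros [y py] [y' py']. apply j3; auto.
    - intros i [y py]. apply sig_eq, j4, py. }
  destruct (limit_extension Y l2 (fun z => iff_refl _) (induced Xp)
              (fg_induced_finite Xp (x :: l1) (fun z => iff_refl _))
              (fg_induced_K Xp (x :: l1) (fun z => iff_refl _)) e ee)
    as [g [(ginj & gR & gS & gop) ge]].
  set (phi' z := match excluded_middle_informative (gen limit (x :: l1) z) with
                 | left p => g (exist _ z p) | right _ => z end).
  assert (phi'_g : forall z (p : gen limit (x :: l1) z), phi' z = g (exist _ z p)).
  { intros z p. unfold phi'. destruct excluded_middle_informative; [| contradiction].
    f_equal. apply sig_eq; auto. }
  destruct (partial_iso_of_emb limit (x :: l1) phi') as [psi' Hpsi'].
  - intros z z' p p' E. rewrite (phi'_g _ p), (phi'_g _ p') in E.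
    exact (f_equal (@proj1_sig _ _) (ginj _ _ E)).
  - intros z z' p p'. rewrite (phi'_g _ p), (phi'_g _ p').
    exact (conj (gR (exist _ z p) (exist _ z' p')) (gS (exist _ z p) (exist _ z' p'))).
  - intros i z p. rewrite (phi'_g _ (gen_op i p)), (phi'_g _ p), <- gop. reflexivity.
  - exists (map phi' (x :: l1)), phi', psi'. split; auto.
    intros z gz. rewrite (phi'_g _ (sub _ gz)).
    destruct (i1 z gz) as [a b].
    transitivity (g (e (exist (fun w => sp Y w) (phi z) a))); [| apply ge].
    f_equal. apply sig_eq. simpl. auto.
Qed.

Lemma limit_countable : countable limit.
Proof. exists (fun x => proj1_sig x). intros x y H. apply sig_eq; auto. Qed.

Lemma limit_ultrahomogeneous : ultrahomogeneous limit.
Proof.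
  apply (ultrahomogeneous_of_forth limit (fun x => proj1_sig x)).
  - intros x y H. apply sig_eq; auto.
  - exact limit_forth.
Qed.

Lemma limit_age : age_is limit (finite_mem K).
Proof.
  intros N. split.
  - intros [KN finN].
    set (X0 := {| sp := fun _ : limit => False; sp_closed := fun _ _ h => h |}).
    destruct (limit_extension X0 [] (fun x => conj (fun h => False_ind _ h) (@gen_nil _ _ x))
                N finN KN (fun xx => False_rect _ (proj2_sig xx))) as [h [eh _]].
    { split; [| split; [| split]];
        [intros [? []] | intros [? []] | intros [? []] | intros ? [? []]]. }
    exact (emb_image_fg limit N h eh finN).
  - intros [X [[lx HX] [h isoh]]]. split.
    + exact (K_emb _ _ h (fg_induced_K X lx HX) (proj1 isoh)).
    + destruct (fg_induced_finite X lx HX) as [lX HlX].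
      apply (finite_inj h lX); auto. apply isoh.
Qed.

Theorem Fraisse_limit_exists : exists M, Fraisse_limit (finite_mem K) M.
Proof.
  exists limit.
  split; [exact limit_countable | split; [exact limit_ultrahomogeneous | exact limit_age]].
Qed.

End FraisseLimit.

(** * First-order syntax *)

Definition fNot (p : fm) : fm := fImp p fBot.
Definition fAnd (p q : fm) : fm := fNot (fImp p (fNot q)).
Definition fOr (p q : fm) : fm := fImp (fNot p) q.
Definition fEx (p : fm) : fm := fNot (fAll (fNot p)).
Definition fTop : fm := fImp fBot fBot.
Definition fIff (p q : fm) : fm := fAnd (fImp p q) (fImp q p).
Definition bigAnd (l : list fm) : fm := fold_right fAnd fTop l.
Definition bigOr (l : list fm) : fm := fold_right fOr fBot l.

Section Sat.
Variable N : RSStr.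

Lemma sat_and e p q : sat N e (fAnd p q) <-> sat N e p /\ sat N e q.
Proof. simpl; tauto. Qed.

Lemma sat_or e p q : sat N e (fOr p q) <-> sat N e p \/ sat N e q.
Proof. simpl; tauto. Qed.

Lemma sat_iff e p q : sat N e (fIff p q) <-> (sat N e p <-> sat N e q).
Proof. simpl; tauto. Qed.

Lemma sat_ex e p : sat N e (fEx p) <-> exists x, sat N (scons x e) p.
Proof.
  simpl. split; [| firstorder].
  intros H. apply NNPP. intros H'. apply H. intros x Hx. apply H'. eauto.
Qed.

Lemma sat_bigAnd e l : sat N e (bigAnd l) <-> forall q, In q l -> sat N e q.
Proof.
  induction l as [| a r IH]; [simpl; tauto |].
  change (bigAnd (a :: r)) with (fAnd a (bigAnd r)). rewrite sat_and, IH. simpl.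
  firstorder congruence.
Qed.

Lemma sat_bigOr e l : sat N e (bigOr l) <-> exists q, In q l /\ sat N e q.
Proof.
  induction l as [| a r IH]; [simpl; firstorder |].
  change (bigOr (a :: r)) with (fOr a (bigOr r)). rewrite sat_or, IH. simpl.
  firstorder congruence.
Qed.

End Sat.

Lemma bound_mono k m p : bound k p -> k <= m -> bound m p.
Proof.
  revert k m; induction p; simpl; intros k' m' H L; try (destruct H; split; eauto; lia); auto.
  apply (IHp (S k')); auto; lia.
Qed.

Lemma bound_exists p : exists n, bound n p.
Proof.
  induction p; simpl; try (exists (S (max n n0)); lia).
  - exists 0; auto.
  - destruct IHp1 as [a Ha], IHp2 as [b Hb].
    exists (max a b). split; eapply bound_mono; eauto; lia.
  - destruct IHp as [a Ha]. exists a. eapply bound_mono; eauto.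
Qed.

Lemma sat_env_ext N p : forall n e e', bound n p -> (forall i, i < n -> e i = e' i) ->
  (sat N e p <-> sat N e' p).
Proof.
  induction p; simpl; intros m e e' B H; try (rewrite !H by tauto; tauto); try tauto.
  - destruct B. rewrite (IHp1 m e e'), (IHp2 m e e'); auto. tauto.
  - assert (HH : forall x i, i < S m -> scons x e i = scons x e' i)
      by (intros x [| i] Hi; simpl; auto; apply H; lia).
    split; intros G x; [rewrite <- (IHp (S m) (scons x e)) | rewrite (IHp (S m) (scons x e))];
      auto.
Qed.

Definition fClose (n : nat) (p : fm) : fm := Nat.iter n fAll p.

Lemma bound_fClose n p m : bound (m + n) p -> bound m (fClose n p).
Proof.
  revert m; induction n as [| n IH]; intros m B; simpl.
  - rewrite Nat.add_0_r in B; auto.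
  - apply IH. replace (S m + n) with (m + S n) by lia. auto.
Qed.

Lemma bound_fClose_inv n p m : bound m (fClose n p) -> bound (m + n) p.
Proof.
  revert m; induction n as [| n IH]; intros m B; simpl in *.
  - rewrite Nat.add_0_r; auto.
  - replace (m + S n) with (S m + n) by lia. apply IH. auto.
Qed.

Lemma holds_fClose N n p : (forall e, sat N e p) -> holds N (fClose n p).
Proof. unfold holds; induction n as [| n IH]; simpl; intros H e; auto. Qed.

Lemma scons_eta {T} (e : nat -> T) : scons (e 0) (fun k => e (S k)) = e.
Proof. apply functional_extensionality. intros [| k]; auto. Qed.

Lemma holds_fClose_inv N n p : holds N (fClose n p) -> forall e, sat N e p.
Proof.
  unfold holds; induction n as [| n IH]; simpl; auto. intros H. apply IH. intros e.
  rewrite <- (scons_eta e). apply H.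
Qed.

Lemma map_scons {A B} (h : A -> B) x e :
  (fun n => h (scons x e n)) = scons (h x) (fun n => h (e n)).
Proof. apply functional_extensionality. intros [| k]; auto. Qed.

Lemma sat_qf_emb (N N' : RSStr) (h : N -> N') : emb h -> forall p, qf p ->
  forall e, sat N e p <-> sat N' (fun n => h (e n)) p.
Proof.
  intros (hinj & hR & hS & _) p. induction p; simpl; intros Q e; try tauto.
  - apply hR.
  - apply hS.
  - split; [intros E; rewrite E; reflexivity | apply hinj].
  - destruct Q. rewrite IHp1, IHp2 by auto. tauto.
Qed.

Lemma sat_iso (N N' : RSStr) (h : N -> N') : iso h ->
  forall p e, sat N e p <-> sat N' (fun n => h (e n)) p.
Proof.
  intros [(hinj & hR & hS & _) hs] p. induction p; simpl; intros e; try tauto.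
  - apply hR.
  - apply hS.
  - split; [intros E; rewrite E; reflexivity | apply hinj].
  - rewrite IHp1, IHp2. tauto.
  - split.
    + intros H y. destruct (hs y) as [x <-]. rewrite <- map_scons. apply IHp. auto.
    + intros H x. apply IHp. rewrite map_scons. auto.
Qed.

(** * Atomic diagrams *)

Definition atoms (n : nat) : list fm :=
  flat_map (fun i => flat_map (fun j => [fR i j; fS i j; fEq i j]) (seq 0 n)) (seq 0 n).

Lemma atoms_qf_bound n a : In a (atoms n) -> qf a /\ bound n a.
Proof.
  unfold atoms. rewrite in_flat_map. intros (i & Hi & H). rewrite in_flat_map in H.
  destruct H as (j & Hj & H). apply in_seq in Hi, Hj.
  simpl in H. destruct H as [<- | [<- | [<- | []]]]; simpl; lia.
Qed.

Lemma in_atoms n i j : i < n -> j < n ->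
  In (fR i j) (atoms n) /\ In (fS i j) (atoms n) /\ In (fEq i j) (atoms n).
Proof.
  intros Hi Hj. unfold atoms.
  repeat split; apply in_flat_map; exists i; (split; [apply in_seq; lia |]);
    apply in_flat_map; exists j; (split; [apply in_seq; lia |]); simpl; tauto.
Qed.

Definition same_atoms (N N' : RSStr) (e : nat -> N) (e' : nat -> N') (n : nat) : Prop :=
  forall a, In a (atoms n) -> (sat N e a <-> sat N' e' a).

Lemma same_atoms_sym N N' e e' n : same_atoms N N' e e' n -> same_atoms N' N e' e n.
Proof. intros A a H. rewrite (A a H); tauto. Qed.

Lemma same_atoms_rel N N' e e' n i j : same_atoms N N' e e' n -> i < n -> j < n ->
  (rR N (e i) (e j) <-> rR N' (e' i) (e' j)) /\ (rS N (e i) (e j) <-> rS N' (e' i) (e' j)) /\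
  (e i = e j <-> e' i = e' j).
Proof.
  intros A Hi Hj. destruct (in_atoms n i j Hi Hj) as (a1 & a2 & a3).
  exact (conj (A _ a1) (conj (A _ a2) (A _ a3))).
Qed.

Lemma same_atoms_sat_qf N N' e e' n p : qf p -> bound n p -> same_atoms N N' e e' n ->
  (sat N e p <-> sat N' e' p).
Proof.
  intros Q B A. revert Q B. induction p; simpl; intros Q B; try tauto.
  - apply (A (fR n0 n1)), in_atoms; tauto.
  - apply (A (fS n0 n1)), in_atoms; tauto.
  - apply (A (fEq n0 n1)), in_atoms; tauto.
Qed.

Definition literal (a : fm) (b : bool) : fm := if b then a else fNot a.

Definition truth (N : RSStr) (e : nat -> N) (a : fm) : bool :=
  if excluded_middle_informative (sat N e a) then true else false.

Definition atom_values (N : RSStr) (e : nat -> N) (n : nat) : list bool :=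
  map (truth N e) (atoms n).

Definition diagram (n : nat) (bs : list bool) : fm :=
  bigAnd (map (fun ab => literal (fst ab) (snd ab)) (combine (atoms n) bs)).

Lemma combine_map_r {A B} (f : A -> B) (l : list A) :
  combine l (map f l) = map (fun a => (a, f a)) l.
Proof. induction l; simpl; congruence. Qed.

Lemma sat_diagram N N' e e' n :
  sat N' e' (diagram n (atom_values N e n)) <-> same_atoms N N' e e' n.
Proof.
  unfold diagram, atom_values. rewrite combine_map_r, map_map, sat_bigAnd. split.
  - intros H a Ha. specialize (H (literal a (truth N e a))). simpl in H.
    assert (G : sat N' e' (literal a (truth N e a))) by (apply H, in_map_iff; eauto).
    unfold literal, truth in G. destruct excluded_middle_informative; simpl in G; tauto.
  - intros A q Hq. apply in_map_iff in Hq. destruct Hq as (a & <- & Ha). simpl.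
    specialize (A a Ha). unfold literal, truth. destruct excluded_middle_informative; simpl; tauto.
Qed.

Lemma bigAnd_qf_bound n l :
  (forall q, In q l -> qf q /\ bound n q) -> qf (bigAnd l) /\ bound n (bigAnd l).
Proof.
  induction l as [| a r IH]; simpl; intros H; [tauto |].
  destruct (H a), IH; auto.
Qed.

Lemma bigOr_qf_bound n l :
  (forall q, In q l -> qf q /\ bound n q) -> qf (bigOr l) /\ bound n (bigOr l).
Proof.
  induction l as [| a r IH]; simpl; intros H; [tauto |].
  destruct (H a), IH; auto.
Qed.

Lemma diagram_qf_bound n bs : qf (diagram n bs) /\ bound n (diagram n bs).
Proof.
  apply bigAnd_qf_bound. intros q Hq. apply in_map_iff in Hq. destruct Hq as ([a b] & <- & H).
  apply in_combine_l, atoms_qf_bound in H. destruct b; simpl; tauto.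
Qed.

Fixpoint bool_lists (k : nat) : list (list bool) :=
  match k with
  | 0 => [[]]
  | S k => map (cons true) (bool_lists k) ++ map (cons false) (bool_lists k)
  end.

Lemma in_bool_lists (l : list bool) : In l (bool_lists (length l)).
Proof.
  induction l as [| b l IH]; simpl; auto. apply in_or_app.
  destruct b; [left | right]; apply in_map; auto.
Qed.

(** * The theory of the Fraïssé limit *)

Lemma gen_relational (N : RSStr) l x : gen N l x <-> In x l.
Proof. split; [intros G; destruct G as [| []]; auto | apply gen_base]. Qed.

Definition tuple_substr (N : RSStr) (e : nat -> N) (n : nat) : substr N :=
  {| sp := fun x => exists i, i < n /\ e i = x; sp_closed := fun i => match i with end |}.

Lemma fin_gen_tuple_substr N e n : fin_gen (tuple_substr N e n).
Proof.
  exists (map e (seq 0 n)). intros x. rewrite gen_relational, in_map_iff. simpl.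
  split; intros (i & h1 & h2); exists i; rewrite in_seq in *; split; auto; lia.
Qed.

Lemma tuple_substr_iso (N N' : RSStr) e e' n : same_atoms N N' e e' n ->
  exists h : induced (tuple_substr N e n) -> induced (tuple_substr N' e' n),
    iso h /\ forall xx i, i < n -> proj1_sig xx = e i -> proj1_sig (h xx) = e' i.
Proof.
  intros A.
  assert (hex : forall xx : induced (tuple_substr N e n),
             {y | sp (tuple_substr N' e' n) y /\
                  forall i, i < n -> e i = proj1_sig xx -> e' i = y}).
  { intros [x px]. destruct (constructive_indefinite_description _ px) as [i [Hi Ei]].
    exists (e' i). split; [exists i; auto |].
    intros j Hj Ej. apply (same_atoms_rel _ _ _ _ _ j i A Hj Hi). simpl in Ej. congruence. }
  exists (fun xx => exist _ (proj1_sig (hex xx)) (proj1 (proj2_sig (hex xx)))).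
  assert (hv : forall xx i, i < n -> proj1_sig xx = e i -> proj1_sig (hex xx) = e' i)
    by (intros xx i Hi E; symmetry; apply (proj2 (proj2_sig (hex xx))); auto).
  split; [| intros xx i Hi E; apply hv; auto].
  assert (hv' : forall xx, exists i, i < n /\ e i = proj1_sig xx /\ proj1_sig (hex xx) = e' i).
  { intros [x px]. pose proof px as (i & Hi & Ei).
    exists i; split; [| split]; [exact Hi | exact Ei | apply hv; simpl; auto]. }
  split; [split; [| split; [| split]] |]; simpl.
  - intros xx yy E. apply (f_equal (@proj1_sig _ _)) in E. simpl in E.
    destruct (hv' xx) as (i & Hi & Ex & Hx), (hv' yy) as (j & Hj & Ey & Hy).
    apply sig_eq. transitivity (e i); [exact (eq_sym Ex) |]. transitivity (e j); [| exact Ey].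
    apply (same_atoms_rel _ _ _ _ _ i j A Hi Hj). rewrite <- Hx, <- Hy; exact E.
  - intros xx yy. destruct (hv' xx) as (i & Hi & Ex & Hx), (hv' yy) as (j & Hj & Ey & Hy).
    pose proof (same_atoms_rel _ _ _ _ _ i j A Hi Hj) as Hij.
    rewrite Ex, Ey, <- Hx, <- Hy in Hij. apply Hij.
  - intros xx yy. destruct (hv' xx) as (i & Hi & Ex & Hx), (hv' yy) as (j & Hj & Ey & Hy).
    pose proof (same_atoms_rel _ _ _ _ _ i j A Hi Hj) as Hij.
    rewrite Ex, Ey, <- Hx, <- Hy in Hij. apply Hij.
  - intros [].
  - intros [y (i & Hi & <-)]. exists (exist _ (e i) (ex_intro _ i (conj Hi eq_refl))).
    apply sig_eq. exact (hv (exist _ (e i) (ex_intro _ i (conj Hi eq_refl))) i Hi eq_refl).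
Qed.

Definition substr_incl {N : RSStr} (X : substr N) : induced X -> N := fun x => proj1_sig x.

Lemma emb_substr_incl {N : RSStr} (X : substr N) : emb (substr_incl X).
Proof.
  split; [intros x y E; apply sig_eq, E | split; [| split]]; [tauto | tauto | intros []].
Qed.

(* An environment in the substructure of [e 0, ..., e k]; indices beyond [k] go to [e 0]. *)
Definition tuple_env {N : RSStr} (e : nat -> N) (k i : nat) : induced (tuple_substr N e (S k)) :=
  match lt_dec i (S k) with
  | left h => exist _ (e i) (ex_intro _ i (conj h eq_refl))
  | right _ => exist _ (e 0) (ex_intro _ 0 (conj (Nat.lt_0_succ k) eq_refl))
  end.

Lemma sat_tuple_env (N : RSStr) (e : nat -> N) k psi : qf psi -> bound (S k) psi ->
  (sat (induced (tuple_substr N e (S k))) (tuple_env e k) psi <-> sat N e psi).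
Proof.
  intros Q B. rewrite (sat_qf_emb _ _ _ (emb_substr_incl _) psi Q).
  apply (sat_env_ext N psi (S k)); auto.
  intros i Hi. unfold tuple_env, substr_incl. destruct lt_dec; [reflexivity | contradiction].
Qed.

Lemma tuple_substr_finite (N : RSStr) (e : nat -> N) n : finite_type (induced (tuple_substr N e n)).
Proof.
  apply (finite_inj (substr_incl _) (map e (seq 0 n))).
  - intros [x (i & Hi & <-)]. change (In (e i) (map e (seq 0 n))). apply in_map, in_seq. lia.
  - apply emb_substr_incl.
Qed.

Lemma universal_bound k psi : sentence (fClose k psi) -> bound (S k) psi.
Proof. intros B. apply (bound_mono k); [apply (bound_fClose_inv k psi 0 B) | lia]. Qed.

Section FraisseTheory.
Variables (K : RSStr -> Prop) (M : RSStr).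
Hypothesis M_limit : Fraisse_limit (finite_mem K) M.

(* By ultrahomogeneity the isomorphism between the substructures of two tuples with the same
   atomic diagram extends to an automorphism of [M]. *)
Lemma same_atoms_sat e0 e n p : same_atoms M M e0 e n -> bound n p -> sat M e0 p -> sat M e p.
Proof.
  intros A B S0. destruct M_limit as (_ & U & _).
  destruct (tuple_substr_iso M M e0 e n A) as (h & isoh & hv).
  destruct (U _ _ (fin_gen_tuple_substr M e0 n) (fin_gen_tuple_substr M e n) h isoh)
    as [s [isos Hs]].
  assert (se : forall i, i < n -> s (e0 i) = e i).
  { intros i Hi.
    set (xx := exist _ (e0 i) (ex_intro _ i (conj Hi eq_refl)) : induced (tuple_substr M e0 n)).
    transitivity (proj1_sig (h xx)); [exact (Hs xx) | apply hv; auto]. }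
  apply (sat_iso M M s isos p e0) in S0.
  apply (sat_env_ext M p n _ e B se) in S0. exact S0.
Qed.

Definition realized (n : nat) (p : fm) (bs : list bool) : bool :=
  if excluded_middle_informative (exists e : nat -> M, atom_values M e n = bs /\ sat M e p)
  then true else false.

Definition qe_formula (n : nat) (p : fm) : fm :=
  bigOr (map (diagram n) (filter (realized n p) (bool_lists (length (atoms n))))).

Lemma qe_formula_qf_bound n p : qf (qe_formula n p) /\ bound n (qe_formula n p).
Proof.
  apply bigOr_qf_bound. intros q Hq. apply in_map_iff in Hq. destruct Hq as (bs & <- & _).
  apply diagram_qf_bound.
Qed.

Lemma sat_qe_formula n p : bound n p -> forall e, sat M e p <-> sat M e (qe_formula n p).
Proof.
  intros B e. unfold qe_formula. rewrite sat_bigOr. split.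
  - intros H. exists (diagram n (atom_values M e n)). split.
    + apply in_map, filter_In. split.
      * unfold atom_values. rewrite <- (length_map (truth M e)). apply in_bool_lists.
      * unfold realized. destruct excluded_middle_informative as [h | h]; auto. exfalso; eauto.
    + apply sat_diagram. intros a _. tauto.
  - intros (q & Hq & Sq). apply in_map_iff in Hq. destruct Hq as (bs & <- & Hbs).
    apply filter_In in Hbs. destruct Hbs as [_ G]. unfold realized in G.
    destruct excluded_middle_informative as [(e0 & <- & S0) | h]; [| discriminate].
    apply sat_diagram in Sq. eapply same_atoms_sat; eauto.
Qed.

Lemma Th_equiv n p q : bound n p -> bound n q -> (forall e, sat M e p <-> sat M e q) ->
  forall N, model (Th M) N -> forall e, sat N e p <-> sat N e q.
Proof.
  intros Bp Bq H N [_ HN] e.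
  assert (T : Th M (fClose n (fIff p q))).
  { split; [apply (bound_fClose n _ 0); simpl; tauto |].
    apply holds_fClose. intros e'. apply sat_iff, H. }
  apply sat_iff. apply (holds_fClose_inv N n), HN, T.
Qed.

Theorem QE_Th : QE (Th M).
Proof.
  intros n p B. exists (qe_formula n p). destruct (qe_formula_qf_bound n p) as [Q Bq].
  split; auto. split; auto. apply (Th_equiv n); auto. apply sat_qe_formula; auto.
Qed.

Theorem model_complete_Th : model_complete (Th M).
Proof.
  intros N N' h HN HN' eh p e. destruct (bound_exists p) as [n B].
  destruct (QE_Th n p B) as (psi & Q & Bp & H).
  rewrite (H N HN), (H N' HN'). apply sat_qf_emb; auto.
Qed.

(* The existential closure of the diagram of [e, y] is equivalent to a quantifier-free formula,
   which transfers between tuples with the same atomic diagram. *)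
Lemma models_same_atoms_extend N N' e e' n y : model (Th M) N -> model (Th M) N' ->
  same_atoms N N' e e' n -> exists y', same_atoms N N' (scons y e) (scons y' e') (S n).
Proof.
  intros HN HN' A.
  set (phi := fEx (diagram (S n) (atom_values N (scons y e) (S n)))).
  assert (Bphi : bound n phi).
  { unfold phi, fEx, fNot. cbn [bound]. split; [split; [apply diagram_qf_bound |] |]; exact I. }
  destruct (QE_Th n phi Bphi) as (psi & Q & Bp & H).
  assert (S1 : sat N e phi) by (apply sat_ex; exists y; apply sat_diagram; intros a _; tauto).
  rewrite (H N HN), (same_atoms_sat_qf N N' e e' n psi Q Bp A), <- (H N' HN') in S1.
  apply sat_ex in S1. destruct S1 as [y' Hy']. exists y'. apply sat_diagram in Hy'. exact Hy'.
Qed.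

Section CountableModels.
Variables N N' : RSStr.
Hypothesis HN : model (Th M) N.
Hypothesis HN' : model (Th M) N'.
Variables (d : N) (d' : N').

Definition env_l (L : list (N * N')) (i : nat) : N := fst (nth i L (d, d')).
Definition env_r (L : list (N * N')) (i : nat) : N' := snd (nth i L (d, d')).

Definition matched (L : list (N * N')) : Prop := same_atoms N N' (env_l L) (env_r L) (length L).

Lemma env_l_cons y y' L : env_l ((y, y') :: L) = scons y (env_l L).
Proof. apply functional_extensionality; intros [| i]; reflexivity. Qed.

Lemma env_r_cons y y' L : env_r ((y, y') :: L) = scons y' (env_r L).
Proof. apply functional_extensionality; intros [| i]; reflexivity. Qed.

Lemma matched_forth L y : matched L -> exists y', matched ((y, y') :: L).
Proof.
  intros H. destruct (models_same_atoms_extend N N' _ _ _ y HN HN' H) as [y' Hy'].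
  exists y'. unfold matched. rewrite env_l_cons, env_r_cons. exact Hy'.
Qed.

Lemma matched_back L y' : matched L -> exists y, matched ((y, y') :: L).
Proof.
  intros H. destruct (models_same_atoms_extend N' N _ _ _ y' HN' HN (same_atoms_sym _ _ _ _ _ H))
    as [y Hy].
  exists y. unfold matched. rewrite env_l_cons, env_r_cons. apply same_atoms_sym, Hy.
Qed.

Lemma matched_in L x x' y y' : matched L -> In (x, x') L -> In (y, y') L ->
  (rR N x y <-> rR N' x' y') /\ (rS N x y <-> rS N' x' y') /\ (x = y <-> x' = y').
Proof.
  intros H Hx Hy.
  destruct (In_nth L _ (d, d') Hx) as [i [Hi Ei]], (In_nth L _ (d, d') Hy) as [j [Hj Ej]].
  pose proof (same_atoms_rel _ _ _ _ _ i j H Hi Hj) as A.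
  unfold env_l, env_r in A. rewrite Ei, Ej in A. exact A.
Qed.

Variables (cN : N -> nat) (cN' : N' -> nat).
Hypothesis cN_inj : forall x y, cN x = cN y -> x = y.
Hypothesis cN'_inj : forall x y, cN' x = cN' y -> x = y.

Lemma matched_step L k : matched L -> exists L', matched L' /\ incl L L' /\
  (forall x, cN x = k -> exists x', In (x, x') L') /\
  (forall x', cN' x' = k -> exists x, In (x, x') L').
Proof.
  intros H.
  assert (H1 : exists L1, matched L1 /\ incl L L1 /\
                 forall x, cN x = k -> exists x', In (x, x') L1).
  { destruct (classic (exists x, cN x = k)) as [[x Hx] | nx].
    - destruct (matched_forth L x H) as [x' Hx']. exists ((x, x') :: L).
      split; [exact Hx' | split; [intros p; simpl; auto |]].
      intros z Hz. rewrite (cN_inj z x) by congruence. exists x'; simpl; auto.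
    - exists L. split; [exact H | split; [apply incl_refl | intros x Hx; exfalso; eauto]]. }
  destruct H1 as (L1 & H1 & I1 & F1).
  destruct (classic (exists x', cN' x' = k)) as [[x' Hx'] | nx'].
  - destruct (matched_back L1 x' H1) as [x Hx]. exists ((x, x') :: L1).
    split; [exact Hx | split; [intros p Hp; simpl; auto | split]].
    + intros z Hz. destruct (F1 z Hz) as [z' Hz']. exists z'; simpl; auto.
    + intros z' Hz'. rewrite (cN'_inj z' x') by congruence. exists x; simpl; auto.
  - exists L1. split; [exact H1 | split; [exact I1 | split; [exact F1 |]]].
    intros z' Hz'; exfalso; eauto.
Qed.

Lemma countable_models_iso : exists h : N -> N', iso h.
Proof.
  assert (next : forall (L : {L | matched L}) (k : nat), exists L' : {L | matched L},
             incl (proj1_sig L) (proj1_sig L') /\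
             (forall x, cN x = k -> exists x', In (x, x') (proj1_sig L')) /\
             (forall x', cN' x' = k -> exists x, In (x, x') (proj1_sig L'))).
  { intros [L HL] k. destruct (matched_step L k HL) as (L' & HL' & E).
    exists (exist _ L' HL'); exact E. }
  destruct (choice _ (fun Lk : {L | matched L} * nat => next (fst Lk) (snd Lk))) as [nx Hnx].
  assert (matched_nil : matched []) by (intros a []).
  set (st := fix st k := match k with 0 => exist _ [] matched_nil | S k => nx (st k, k) end).
  assert (mono : forall k k', k <= k' -> incl (proj1_sig (st k)) (proj1_sig (st k'))).
  { induction 1; [apply incl_refl |]. eapply incl_tran; [eauto |]. apply (Hnx (st m, m)). }
  set (Rel x x' := exists k, In (x, x') (proj1_sig (st k))).
  assert (Rel_both : forall x x' y y', Rel x x' -> Rel y y' ->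
            (rR N x y <-> rR N' x' y') /\ (rS N x y <-> rS N' x' y') /\ (x = y <-> x' = y')).
  { intros x x' y y' [k Hk] [k' Hk']. apply (matched_in (proj1_sig (st (max k k')))).
    - apply proj2_sig.
    - apply (mono k); auto; lia.
    - apply (mono k'); auto; lia. }
  assert (Rel_fwd : forall x, exists x', Rel x x').
  { intros x. destruct (proj1 (proj2 (Hnx (st (cN x), cN x))) x eq_refl) as [x' Hx'].
    exists x', (S (cN x)). exact Hx'. }
  assert (Rel_bwd : forall x', exists x, Rel x x').
  { intros x'. destruct (proj2 (proj2 (Hnx (st (cN' x'), cN' x'))) x' eq_refl) as [x Hx].
    exists x, (S (cN' x')). exact Hx. }
  destruct (choice _ Rel_fwd) as [h Hh].
  exists h. split; [split; [| split; [| split]] |].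
  - intros x y E. apply (Rel_both _ _ _ _ (Hh x) (Hh y)), E.
  - intros x y. apply (Rel_both _ _ _ _ (Hh x) (Hh y)).
  - intros x y. apply (Rel_both _ _ _ _ (Hh x) (Hh y)).
  - intros [].
  - intros x'. destruct (Rel_bwd x') as [x Hx]. exists x. apply (Rel_both _ _ _ _ (Hh x) Hx). auto.
Qed.

End CountableModels.

Theorem omega_categorical_Th : omega_categorical (Th M).
Proof.
  intros N N' HN HN' [cN cN_inj] _ [cN' cN'_inj] _.
  destruct HN as [[d] HN0], HN' as [[d'] HN0'].
  exact (countable_models_iso N N' (conj (inhabits d) HN0) (conj (inhabits d') HN0') d d'
           cN cN' cN_inj cN'_inj).
Qed.

Section ModelCompletion.
Hypothesis K_emb : forall (D E : RSStr) (h : E -> D), K D -> emb h -> K E.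
Hypothesis K_AP : AP K.
Hypothesis K_models : forall N, model (ThK K) N -> K N.

Lemma universal_ThK_Th p : sentence p -> universal p -> entails (ThK K) p -> entails (Th M) p.
Proof.
  intros Sp (k & psi & Q & ->) H N [_ HN]. apply HN. split; auto.
  apply holds_fClose. intros e.
  set (X := tuple_substr M e (S k)).
  assert (KX : K (induced X)).
  { destruct M_limit as (_ & _ & age). apply age.
    exists X. split; [apply fin_gen_tuple_substr |].
    exists (fun x => x). split; [apply emb_id | intros y; exists y; auto]. }
  assert (MX : model (ThK K) (induced X)).
  { split; [constructor; exact (tuple_env e k 0) |].
    intros q [_ Hq]. apply Hq; [exact KX | constructor; exact (tuple_env e k 0)]. }
  apply (sat_tuple_env M e k psi Q (universal_bound k psi Sp)).
  exact (holds_fClose_inv _ k psi (H _ MX) (tuple_env e k)).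
Qed.

Lemma universal_Th_ThK p : sentence p -> universal p -> entails (Th M) p -> entails (ThK K) p.
Proof.
  intros Sp (k & psi & Q & ->) H N HN.
  apply holds_fClose. intros e.
  set (X := tuple_substr N e (S k)).
  assert (KX : K (induced X))
    by exact (K_emb _ _ (substr_incl X) (K_models N HN) (emb_substr_incl X)).
  destruct M_limit as (_ & _ & age).
  destruct (proj1 (age (induced X)) (conj KX (tuple_substr_finite N e (S k))))
    as (Y & _ & g & isog).
  set (gm x := substr_incl Y (g x)).
  assert (egm : emb gm) by exact (emb_comp g (substr_incl Y) (proj1 isog) (emb_substr_incl Y)).
  assert (MM : model (Th M) M)
    by (split; [constructor; exact (gm (tuple_env e k 0)) | intros q [_ Hq]; exact Hq]).
  apply (sat_tuple_env N e k psi Q (universal_bound k psi Sp)).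
  apply (sat_qf_emb _ _ gm egm psi Q).
  exact (holds_fClose_inv _ k psi (H _ MM) _).
Qed.

Lemma AP_models_ThK : AP (model (ThK K)).
Proof.
  intros A B C f g MA MB MC ef eg.
  destruct (K_AP A B C f g (K_models A MA) (K_models B MB) (K_models C MC) ef eg)
    as (D & i & j & KD & ei & ej & c).
  exists D, i, j. split; auto.
  destruct MA as [[a] _]. split; [constructor; exact (i a) |].
  intros q [_ Hq]. apply Hq; auto.
Qed.

Theorem model_completion_Th : model_completion (Th M) (ThK K).
Proof.
  split; [exact model_complete_Th | split; [| exact AP_models_ThK]].
  intros p Sp Up. split; [apply universal_ThK_Th | apply universal_Th_ThK]; auto.
Qed.

End ModelCompletion.

End FraisseTheory.

(** * Failure of amalgamation for (C) and (D) *)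

Inductive pt3 := c0 | d1 | d2.

Definition eq3 (x y : pt3) : bool :=
  match x, y with c0, c0 | d1, d1 | d2, d2 => true | _, _ => false end.

Definition star3 (x y : pt3) : bool :=
  match x, y with d1, d2 | d2, d1 => false | _, _ => true end.

Definition star_base : Str unit :=
  mkStr pt3 (fun x y => eq3 x y = true) (fun x y => star3 x y = true) (fun _ x => x).

(* [None] is a new point placed [R]-below [c0]. *)
Definition below_c0 (x y : option pt3) : bool :=
  match x, y with
  | None, None | None, Some c0 => true
  | Some a, Some b => eq3 a b
  | _, _ => false
  end.

Definition star_ext (x y : option pt3) : bool :=
  match x, y with
  | None, None | None, Some c0 | Some c0, None => true
  | Some a, Some b => star3 a b
  | _, _ => false
  end.

Definition star_with (R : option pt3 -> option pt3 -> bool) (fnew : pt3) : Str unit :=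
  mkStr (option pt3) (fun x y => R x y = true) (fun x y => star_ext x y = true)
    (fun _ x => match x with None => Some fnew | Some y => Some y end).

Definition star_below : Str unit := star_with below_c0 d1.
Definition star_above : Str unit := star_with (fun x y => below_c0 y x) d2.

Ltac finite_cases := repeat match goal with
  | x : pt3 |- _ => destruct x
  | x : option pt3 |- _ => destruct x
  | x : unit |- _ => destruct x
  end; simpl in *; try discriminate; try reflexivity; try tauto.

Lemma KD_star_base : KD star_base.
Proof. unfold KD, preserving; simpl; repeat split; intros; finite_cases. Qed.

Lemma KD_star_below : KD star_below.
Proof. unfold KD, preserving; simpl; repeat split; intros; finite_cases. Qed.

Lemma KD_star_above : KD star_above.
Proof. unfold KD, preserving; simpl; repeat split; intros; finite_cases. Qed.

Lemma KD_KC (N : Str unit) : KD N -> KC N.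
Proof. unfold KD, KC; tauto. Qed.

Lemma emb_Some (R : option pt3 -> option pt3 -> bool) (fnew : pt3) :
  (forall x y, R (Some x) (Some y) = eq3 x y) -> @emb unit star_base (star_with R fnew) Some.
Proof.
  intros HR; repeat split; simpl; intros *; rewrite ?HR; try congruence;
    destruct x, y; simpl; auto.
Qed.

Lemma not_AP_of_KC (K : Str unit -> Prop) :
  (forall N, K N -> KC N) -> K star_below -> K star_above -> K star_base -> ~ AP K.
Proof.
  intros HK KA KB KC0 ap.
  destruct (ap star_below star_above star_base Some Some KA KB KC0)
    as (D & i & j & KDD & (_ & iR & iS & iop) & (_ & jR & _ & jop) & ij);
    [apply emb_Some; intros [] []; reflexivity ..|].
  destruct (HK D KDD) as (R_trans & R_S & f_S).
  assert (ab : rR D (i None) (j None)).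
  { apply (R_trans _ (i (Some c0))); [apply iR; reflexivity |].
    pose proof (ij c0) as E; simpl in E |- *; rewrite E; apply jR; reflexivity. }
  apply R_S, f_S in ab.
  rewrite <- (iop tt None), <- (jop tt None) in ab; simpl in ab.
  pose proof (ij d2) as E; simpl in E, ab; rewrite <- E in ab.
  apply iS in ab. discriminate.
Qed.

Lemma not_AP_KC : ~ AP KC.
Proof.
  apply not_AP_of_KC; auto using KD_KC, KD_star_below, KD_star_above, KD_star_base.
Qed.

Lemma not_AP_KD : ~ AP KD.
Proof.
  apply not_AP_of_KC; auto using KD_KC, KD_star_below, KD_star_above, KD_star_base.
Qed.

(** * The classes of the theorem *)

Lemma SAP_of_superSAP {I} (K : Str I -> Prop) : superSAP_RS K -> SAP K.
Proof.
  intros H A B C f g KA KB KC ef eg.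
  destruct (H A B C f g) as (D & i & j & KD & e1 & e2 & e3 & e4 & _); auto.
  exists D, i, j; auto.
Qed.

Lemma AP_of_SAP {I} (K : Str I -> Prop) : SAP K -> AP K.
Proof.
  intros H A B C f g KA KB KC ef eg.
  destruct (H A B C f g) as (D & i & j & KD & e1 & e2 & e3 & _); auto.
  exists D, i, j; auto.
Qed.

Lemma superSAP_RS_ext {I} (K K' : Str I -> Prop) :
  (forall N, K N <-> K' N) -> superSAP_RS K -> superSAP_RS K'.
Proof.
  intros E H A B C f g KA KB KC ef eg.
  destruct (H A B C f g) as (D & i & j & KD & R); try apply E; auto.
  exists D, i, j. split; auto. apply E; auto.
Qed.

Lemma has_prop_pullback {T U} (r : T -> T -> Prop) (r' : U -> U -> Prop) (h : T -> U) p :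
  (forall x y, h x = h y -> x = y) -> (forall x y, r x y <-> r' (h x) (h y)) ->
  has_prop p r' -> has_prop p r.
Proof.
  intros hi hr; destruct p; simpl; intros H.
  - intros x y z a b. apply hr. apply hr in a, b. eauto.
  - intros x. apply hr. auto.
  - intros x y a. apply hr. apply hr in a. auto.
  - intros x a. apply hr in a. eapply H; eauto.
  - intros x y a b. apply hi. apply hr in a, b. auto.
Qed.

Lemma Kkind_emb {I} P Q (kind : I -> op_kind) (D E : Str I) (h : E -> D) :
  Kkind P Q kind D -> emb h -> Kkind P Q kind E.
Proof.
  intros ((HP & HQ & Hin) & Ho) (hi & hR & hS & hop). split; [split; [| split] |].
  - intros p Pp. apply (has_prop_pullback _ _ h p hi hR), HP, Pp.
  - intros p Pp. apply (has_prop_pullback _ _ h p hi hS), HQ, Pp.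
  - intros x y H. apply hS, Hin, hR, H.
  - intros i. destruct (Ho i) as [o1 o2].
    destruct (kind i); simpl in *; split; auto; intros x y H;
      first [apply hR | apply hS]; rewrite !hop; first [apply o1 | apply o2];
      first [apply hR | apply hS]; auto.
Qed.

Lemma Kkind_empty {I} P Q (kind : I -> op_kind) (E : Str I) : (E -> False) -> Kkind P Q kind E.
Proof.
  intros H. split; [split; [| split] |].
  - intros []; simpl; intros; exfalso; eauto.
  - intros []; simpl; intros; exfalso; eauto.
  - intros x; exfalso; eauto.
  - intros i. destruct (kind i); simpl; split; auto; intros x; exfalso; eauto.
Qed.

Definition kind_of_sum {I1 I2 I3 I4 : Type} (x : I1 + I2 + I3 + I4) : op_kind :=
  match x with
  | inl (inl (inl _)) => PresRS
  | inl (inl (inr _)) => RevRS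
  | inl (inr _) => PresR
  | inr _ => RevR
  end.

Lemma KPQ_ops_Kkind P Q I1 I2 I3 I4 N : KPQ_ops P Q I1 I2 I3 I4 N <-> Kkind P Q kind_of_sum N.
Proof.
  unfold KPQ_ops, Kkind. split.
  - intros (H & h1 & h2 & h3 & h4). split; auto. intros [[[k | k] | k] | k]; simpl; auto.
  - intros (H & h). split; [auto | split; [| split; [| split]]]; intros k.
    + exact (h (inl (inl (inl k)))).
    + exact (h (inl (inl (inr k)))).
    + exact (proj1 (h (inl (inr k)))).
    + exact (proj1 (h (inr k))).
Qed.

Definition no_kind (x : Empty_set) : op_kind := match x with end.

Lemma KPQ_Kkind P Q N : KPQ P Q N <-> Kkind P Q no_kind N.
Proof. unfold KPQ, Kkind. split; [intros H; split; auto; intros [] | intros (H & _); auto]. Qed.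

Definition prop_axiom (p : rprop) (atom : nat -> nat -> fm) : fm :=
  match p with
  | Trans => fAll (fAll (fAll (fImp (atom 2 1) (fImp (atom 1 0) (atom 2 0)))))
  | Refl => fAll (atom 0 0)
  | Symm => fAll (fAll (fImp (atom 1 0) (atom 0 1)))
  | Irrefl => fAll (fImp (atom 0 0) fBot)
  | Antisym => fAll (fAll (fImp (atom 1 0) (fImp (atom 0 1) (fEq 1 0))))
  end.

Definition inclusion_axiom : fm := fAll (fAll (fImp (fR 1 0) (fS 1 0))).

Lemma sat_prop_axiom_R (N : RSStr) e p : sat N e (prop_axiom p fR) <-> has_prop p (rR N).
Proof. destruct p; simpl; tauto. Qed.

Lemma sat_prop_axiom_S (N : RSStr) e p : sat N e (prop_axiom p fS) <-> has_prop p (rS N).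
Proof. destruct p; simpl; tauto. Qed.

Lemma sentence_prop_axiom p atom : atom = fR \/ atom = fS -> sentence (prop_axiom p atom).
Proof. unfold sentence; intros [-> | ->]; destruct p; simpl; repeat split; lia. Qed.

Lemma KPQ_models P Q N : model (ThK (KPQ P Q)) N -> KPQ P Q N.
Proof.
  intros [[d] HN]. set (e := fun _ : nat => d). split; [| split].
  - intros p Pp. apply (sat_prop_axiom_R N e p), HN.
    split; [apply sentence_prop_axiom; auto |].
    intros N' [HP _] _ e'. apply sat_prop_axiom_R; auto.
  - intros p Pp. apply (sat_prop_axiom_S N e p), HN.
    split; [apply sentence_prop_axiom; auto |].
    intros N' [_ [HQ _]] _ e'. apply sat_prop_axiom_S; auto.
  - assert (T : ThK (KPQ P Q) inclusion_axiom).
    { split; [unfold sentence; simpl; lia |]. intros N' [_ [_ Hi]] _ e'. simpl. auto. }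
    intros x y. exact (HN _ T e x y).
Qed.

Lemma KPQ_properties P Q :
  SAP (KPQ P Q) /\ superSAP_RS (KPQ P Q) /\
  exists M : RSStr,
    Fraisse_limit (finite_mem (KPQ P Q)) M /\
    omega_categorical (Th M) /\ QE (Th M) /\ model_completion (Th M) (ThK (KPQ P Q)).
Proof.
  assert (super : superSAP_RS (KPQ P Q)).
  { apply (superSAP_RS_ext (Kkind P Q no_kind)); [intros N; rewrite KPQ_Kkind; tauto |].
    apply superSAP_Kkind. }
  assert (K_emb : forall (D E : RSStr) (h : E -> D), KPQ P Q D -> emb h -> KPQ P Q E).
  { intros D E h. rewrite !KPQ_Kkind. apply Kkind_emb. }
  assert (K_AP : AP (KPQ P Q)) by (apply AP_of_SAP, SAP_of_superSAP, super).
  assert (K_empty : forall E : RSStr, (E -> False) -> KPQ P Q E)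
    by (intros E H; apply KPQ_Kkind, Kkind_empty, H).
  split; [apply SAP_of_superSAP, super | split; [exact super |]].
  destruct (Fraisse_limit_exists Empty_set [] (fun i => match i with end) (KPQ P Q)
              K_emb K_AP K_empty)
    as [M HM].
  exists M. split; [exact HM |].
  split; [apply omega_categorical_Th with (K := KPQ P Q), HM |].
  split; [apply QE_Th with (K := KPQ P Q), HM |].
  apply model_completion_Th; auto using KPQ_models.
Qed.

Lemma KPQ_ops_properties P Q (I1 I2 I3 I4 : Type) :
  superSAP_RS (KPQ_ops P Q I1 I2 I3 I4) /\
  (finite_type I1 -> finite_type I2 -> finite_type I3 -> finite_type I4 ->
   exists M, Fraisse_limit (finite_mem (KPQ_ops P Q I1 I2 I3 I4)) M).
Proof.
  set (K := KPQ_ops P Q I1 I2 I3 I4).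
  assert (E : forall N, Kkind P Q kind_of_sum N <-> K N)
    by (intros N; unfold K; rewrite KPQ_ops_Kkind; tauto).
  assert (super : superSAP_RS K) by (apply (superSAP_RS_ext _ _ E), superSAP_Kkind).
  split; [exact super |].
  intros [l1 H1] [l2 H2] [l3 H3] [l4 H4].
  set (lI := map (fun x => inl (inl (inl x))) l1 ++ map (fun x => inl (inl (inr x))) l2 ++
             map (fun x => inl (inr x)) l3 ++ map (fun x => inr x) l4 : list (I1 + I2 + I3 + I4)).
  assert (lI_full : forall i, In i lI).
  { intros [[[x | x] | x] | x]; unfold lI; rewrite !in_app_iff, !in_map_iff; eauto 10. }
  apply (Fraisse_limit_exists _ lI lI_full K).
  - intros D F h. rewrite <- !E. apply Kkind_emb.
  - apply AP_of_SAP, SAP_of_superSAP, super.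
  - intros F H. apply E, Kkind_empty, H.
Qed.

Theorem theorem3p1 :
  (* (A) *)
  (forall P Q : rprop -> Prop,
     SAP (KPQ P Q) /\ superSAP_RS (KPQ P Q) /\
     exists M : RSStr,
       Fraisse_limit (finite_mem (KPQ P Q)) M /\
       omega_categorical (Th M) /\ QE (Th M) /\
       model_completion (Th M) (ThK (KPQ P Q))) /\
  (* (B) *)
  (forall (P Q : rprop -> Prop) (I1 I2 I3 I4 : Type),
     superSAP_RS (KPQ_ops P Q I1 I2 I3 I4) /\
     (finite_type I1 -> finite_type I2 -> finite_type I3 -> finite_type I4 ->
      exists M, Fraisse_limit (finite_mem (KPQ_ops P Q I1 I2 I3 I4)) M)) /\
  (* (C) *)
  ~ AP KC /\
  (* (D) *)
  ~ AP KD.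
Proof.
  split; [exact KPQ_properties |].
  split; [exact KPQ_ops_properties |].
  split; [exact not_AP_KC | exact not_AP_KD].
Qed.
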